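(* Let $C,D,E$ be finite category presentations. If $\mathcal P:[\![C]\!]\nrightarrow[\![D]\!]$ and $\mathcal Q:[\![D]\!]\nrightarrow[\![E]\!]$ are profunctors with $\mathcal P\cong[\![P]\!]$ and $\mathcal Q\cong[\![Q]\!]$ for finite curryable profunctor presentations $P:C\nrightarrow D$ and $Q:D\nrightarrow E$, then there is a finite curryable profunctor presentation $R:C\nrightarrow E$ with $\mathcal P\odot\mathcal Q\cong[\![R]\!]$.
   Context: Category presentations $C$: sorts, function symbols $f:c\to c'$, equations $C_E$ between parallel paths (composable lists of function symbols, possibly empty); finite if all these sets are finite. Provable equality $\approx_C$: smallest equivalence relation on paths containing $C_E$ and closed under concatenation with composable function symbols; $[\![C]\!]$: sorts as objects, $\approx_C$-classes of paths as morphisms. Profunctors $\mathcal P:\mathcal C\nrightarrow\mathcal D$: functors $\mathcal C^{op}\times\mathcal D\to\mathbf{Set}$ (equivalently categories over $\mathbf 2=\{0\to1\}$ with fibres $\mathcal C,\mathcal D$); isomorphisms are natural isomorphisms. Composite: $(\mathcal P\odot\mathcal Q)(c,e)=\int^{d}\mathcal P(c,d)\times\mathcal Q(d,e)$, the quotient of $\coprod_d\mathcal P(c,d)\times\mathcal Q(d,e)$ by the equivalence relation generated by $(p,\mathcal Q(g,1)q')\sim(\mathcal P(1,g)p,q')$ for $g:d\to d'$. Uncurried presentations $P:C\nrightarrow D$: a set $\mathrm{Fun}(P)$ of symbols $x:c\to d$ ($c$ a $C$-sort, $d$ a $D$-sort) and a set $P_E$ of equations between cross-paths (paths from a $C$-sort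 to a $D$-sort) of the category presentation $|P|$ with sorts $\mathrm{Sort}(C)+\mathrm{Sort}(D)$, symbols $\mathrm{Fun}(C)+\mathrm{Fun}(P)+\mathrm{Fun}(D)$ and equations $C_E+P_E+D_E$; $\approx_P$ is provable equality of $|P|$ restricted to cross-paths; $[\![P]\!]=[\![|P|]\!]$ with $C$-sorts over $0$ and $D$-sorts over $1$. Finite if $\mathrm{Fun}(P)$ and $P_E$ are finite. A short left cross-path is $f.p$ with $f\in\mathrm{Fun}(C)$, $p\in\mathrm{Fun}(P)$; a right cross-path is $p.g$ with $p\in\mathrm{Fun}(P)$, $g$ a $D$-path. For a $C$-sort $c$, $P^c$ is the $D$-instance presentation whose generators are the symbols $p:c\to d$ of $P$ and whose equations are those of $P_E$ with source $c$ (its provable equality being the smallest equivalence relation on its terms $p.g$ containing these equations, closed under right concatenation with $D$-function symbols, and identifying $t.g,t.g'$ for equations $g=g'$ of $D_E$). $P$ is nongenerative if every short left cross-path is $\approx_P$-equal to a right cross-path, conservative if right cross-paths $t,t'$ from $c$ with $t\approx_P t'$ are provably equal in $P^c$, and curryable if it is both nongenerative and conservative. *)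

From Stdlib Require Import List Relations ClassicalEpsilon.
Import ListNotations.

Set Implicit Arguments.

Definition fin_type (T : Type) : Prop := exists l : list T, forall x : T, In x l.

(* Equations are given as a predicate on (source, target, lhs, rhs);
   paths are lists of symbols in diagrammatic order (f.g = [f; g]). *)
Record catpres := CatPres {
  cp_sort : Type;
  cp_fun  : Type;
  cp_src  : cp_fun -> cp_sort;
  cp_tgt  : cp_fun -> cp_sort;
  cp_eq   : cp_sort -> cp_sort -> list cp_fun -> list cp_fun -> Prop }.

Fixpoint valid (C : catpres) (a : cp_sort C) (l : list (cp_fun C)) (b : cp_sort C) : Prop :=
  match l with
  | nil => a = b
  | f :: l' => cp_src C f = a /\ valid C (cp_tgt C f) l' b
  end.

Definition catpres_wf (C : catpres) : Prop :=
  forall a b l l', cp_eq C a b l l' -> valid C a l b /\ valid C a l' b.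

Definition catpres_finite (C : catpres) : Prop :=
  fin_type (cp_sort C) /\ fin_type (cp_fun C) /\
  exists L, forall a b l l', cp_eq C a b l l' -> In (a, b, l, l') L.

Inductive peq (C : catpres) : cp_sort C -> cp_sort C -> list (cp_fun C) -> list (cp_fun C) -> Prop :=
| peq_refl a b l : valid C a l b -> peq C a b l l
| peq_ax a b l l' : cp_eq C a b l l' -> peq C a b l l'
| peq_sym a b l l' : peq C a b l l' -> peq C a b l' l
| peq_trans a b l l' l'' : peq C a b l l' -> peq C a b l' l'' -> peq C a b l l''
| peq_pre f b l l' : peq C (cp_tgt C f) b l l' -> peq C (cp_src C f) b (f :: l) (f :: l')
| peq_post a f l l' : peq C a (cp_src C f) l l' ->
    peq C a (cp_tgt C f) (l ++ [f]) (l' ++ [f]).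

Definition vpath (C : catpres) (a b : cp_sort C) : Type := {l : list (cp_fun C) | valid C a l b}.

Lemma valid_cat (C : catpres) a l b l' c :
  valid C a l b -> valid C b l' c -> valid C a (l ++ l') c.
Proof.
  revert a; induction l as [|f l IH]; simpl; intros a H1 H2.
  - subst; exact H2.
  - destruct H1 as [H1 H3]; split; [exact H1 | exact (IH _ H3 H2)].
Qed.

Definition vcat (C : catpres) (a b c : cp_sort C) (x : vpath C a b) (y : vpath C b c) : vpath C a c :=
  exist _ (proj1_sig x ++ proj1_sig y) (@valid_cat C a _ b _ c (proj2_sig x) (proj2_sig y)).

Definition quot (X : Type) (R : X -> X -> Prop) : Type :=
  {A : X -> Prop | exists x, A = clos_refl_sym_trans X R x}.
Definition cls (X : Type) (R : X -> X -> Prop) (x : X) : quot R :=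
  exist _ (clos_refl_sym_trans X R x) (ex_intro _ x eq_refl).
Definition rep (X : Type) (R : X -> X -> Prop) (q : quot R) : X :=
  proj1_sig (constructive_indefinite_description _ (proj2_sig q)).

Record Cat := MkCat {
  ob   : Type;
  hom  : ob -> ob -> Type;
  idm  : forall a, hom a a;
  comp : forall a b c, hom a b -> hom b c -> hom a c }.
Arguments idm {_} _.
Arguments comp {_ a b c} _ _.

Definition sem_hom (C : catpres) (a b : cp_sort C) : Type :=
  quot (fun x y : vpath C a b => peq C a b (proj1_sig x) (proj1_sig y)).

Definition sem (C : catpres) : Cat :=
  {| ob := cp_sort C;
     hom := sem_hom C;
     idm := fun a => cls _ (exist (fun l => valid C a l a) nil eq_refl);
     comp := fun a b c h k => cls _ (vcat (rep h) (rep k)) |}.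

Record Prof (A B : Cat) := MkProf {
  pobj : ob A -> ob B -> Type;
  pact : forall a a' b b', hom A a' a -> hom B b b' -> pobj a b -> pobj a' b' }.
Arguments pobj {A B} _ _ _.
Arguments pact {A B} _ {a a' b b'} _ _ _.

Definition is_prof (A B : Cat) (P : Prof A B) : Prop :=
  (forall a b (x : pobj P a b), pact P (idm a) (idm b) x = x) /\
  (forall a a' a'' b b' b'' (h : hom A a' a) (h' : hom A a'' a')
          (k : hom B b b') (k' : hom B b' b'') (x : pobj P a b),
      pact P (comp h' h) (comp k k') x = pact P h' k' (pact P h k x)).

Definition prof_iso (A B : Cat) (P Q : Prof A B) : Prop :=
  exists al : forall a b, pobj P a b -> pobj Q a b,
    (forall a b, exists be : pobj Q a b -> pobj P a b,
        (forall x, be (al a b x) = x) /\ (forall y, al a b (be y) = y)) /\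
    (forall a a' b b' (h : hom A a' a) (k : hom B b b') (x : pobj P a b),
        al a' b' (pact P h k x) = pact Q h k (al a b x)).

Definition pc_car (A B E : Cat) (P : Prof A B) (Q : Prof B E) (a : ob A) (e : ob E) : Type :=
  {b : ob B & (pobj P a b * pobj Q b e)%type}.

Definition pc_rel (A B E : Cat) (P : Prof A B) (Q : Prof B E) (a : ob A) (e : ob E)
  (x y : pc_car P Q a e) : Prop :=
  exists b b' (g : hom B b b') (p : pobj P a b) (q' : pobj Q b' e),
    x = existT _ b (p, pact Q g (idm e) q') /\
    y = existT _ b' (pact P (idm a) g p, q').

Definition pcomp (A B E : Cat) (P : Prof A B) (Q : Prof B E) : Prof A E :=
  {| pobj := fun a e => quot (@pc_rel A B E P Q a e);
     pact := fun a a' e e' h k z =>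
       let w := rep z in
       cls _ (existT (fun b => (pobj P a' b * pobj Q b e')%type) (projT1 w)
                (pact P h (idm _) (fst (projT2 w)), pact Q (idm _) k (snd (projT2 w)))) |}.

Record profpres (C D : catpres) := ProfPres {
  pp_fun : Type;
  pp_src : pp_fun -> cp_sort C;
  pp_tgt : pp_fun -> cp_sort D;
  pp_eq  : cp_sort C -> cp_sort D ->
           list (cp_fun C + (pp_fun + cp_fun D)) ->
           list (cp_fun C + (pp_fun + cp_fun D)) -> Prop }.

Section Total.
Variables (C D : catpres) (P : profpres C D).

Definition tsym : Type := (cp_fun C + (pp_fun P + cp_fun D))%type.

Definition t_src (s : tsym) : cp_sort C + cp_sort D :=
  match s with
  | inl f => inl (cp_src C f)
  | inr (inl p) => inl (pp_src P p)
  | inr (inr g) => inr (cp_src D g)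
  end.
Definition t_tgt (s : tsym) : cp_sort C + cp_sort D :=
  match s with
  | inl f => inl (cp_tgt C f)
  | inr (inl p) => inr (pp_tgt P p)
  | inr (inr g) => inr (cp_tgt D g)
  end.

Definition dsym (g : cp_fun D) : tsym := inr (inr g).
Definition csym (f : cp_fun C) : tsym := inl f.

Definition t_eq (a b : cp_sort C + cp_sort D) (l l' : list tsym) : Prop :=
  (exists c c' k k', a = inl c /\ b = inl c' /\ l = map csym k /\ l' = map csym k' /\
                     cp_eq C c c' k k') \/
  (exists d d' k k', a = inr d /\ b = inr d' /\ l = map dsym k /\ l' = map dsym k' /\
                     cp_eq D d d' k k') \/
  (exists c d, a = inl c /\ b = inr d /\ pp_eq P c d l l').

Definition total : catpres := CatPres t_src t_tgt t_eq.
End Total.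

Arguments tsym {C D} P.
Arguments total {C D} P.
Arguments dsym {C D P} g.
Arguments csym {C D P} f.

Definition profpres_wf (C D : catpres) (P : profpres C D) : Prop :=
  forall c d l l', pp_eq P c d l l' ->
    valid (total P) (inl c) l (inr d) /\ valid (total P) (inl c) l' (inr d).

Definition profpres_finite (C D : catpres) (P : profpres C D) : Prop :=
  fin_type (pp_fun P) /\
  exists L, forall c d l l', pp_eq P c d l l' -> In (c, d, l, l') L.

Definition is_rcp (C D : catpres) (P : profpres C D) (c : cp_sort C) (d : cp_sort D)
  (t : list (tsym P)) : Prop :=
  exists (p : pp_fun P) (g : list (cp_fun D)),
    pp_src P p = c /\ valid D (pp_tgt P p) g d /\ t = inr (inl p) :: map dsym g.

Arguments is_rcp {C D} P c d t.

(* provable equality of the D-instance presentation P^c *)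
Inductive inst_eq (C D : catpres) (P : profpres C D) (c : cp_sort C)
  : cp_sort D -> list (tsym P) -> list (tsym P) -> Prop :=
| ie_ax d l l' : pp_eq P c d l l' -> is_rcp P c d l -> is_rcp P c d l' -> @inst_eq C D P c d l l'
| ie_refl d l : is_rcp P c d l -> @inst_eq C D P c d l l
| ie_sym d l l' : @inst_eq C D P c d l l' -> @inst_eq C D P c d l' l
| ie_trans d l l' l'' : @inst_eq C D P c d l l' -> @inst_eq C D P c d l' l'' -> @inst_eq C D P c d l l''
| ie_post l l' g : @inst_eq C D P c (cp_src D g) l l' ->
    @inst_eq C D P c (cp_tgt D g) (l ++ [dsym g]) (l' ++ [dsym g])
| ie_deq a b t k k' : is_rcp P c a t -> cp_eq D a b k k' ->
    @inst_eq C D P c b (t ++ map dsym k) (t ++ map dsym k').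

Arguments inst_eq {C D} P c _ _ _.

Definition nongenerative (C D : catpres) (P : profpres C D) : Prop :=
  forall (f : cp_fun C) (p : pp_fun P), cp_tgt C f = pp_src P p ->
    exists t, is_rcp P (cp_src C f) (pp_tgt P p) t /\
      peq (total P) (inl (cp_src C f)) (inr (pp_tgt P p)) [csym f; inr (inl p)] t.

Definition conservative (C D : catpres) (P : profpres C D) : Prop :=
  forall c d t t', is_rcp P c d t -> is_rcp P c d t' ->
    peq (total P) (inl c) (inr d) t t' -> inst_eq P c d t t'.

Definition curryable (C D : catpres) (P : profpres C D) : Prop :=
  nongenerative P /\ conservative P.

Lemma valid_liftC (C D : catpres) (P : profpres C D) a l b :
  valid C a l b -> valid (total P) (inl a) (map (@csym C D P) l) (inl b).
Proof.
  revert a; induction l as [|f l IH]; simpl; intros a H.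
  - subst; reflexivity.
  - destruct H as [H1 H2]; split; [unfold csym; simpl; rewrite H1; reflexivity | exact (IH _ H2)].
Qed.

Lemma valid_liftD (C D : catpres) (P : profpres C D) a l b :
  valid D a l b -> valid (total P) (inr a) (map (@dsym C D P) l) (inr b).
Proof.
  revert a; induction l as [|f l IH]; simpl; intros a H.
  - subst; reflexivity.
  - destruct H as [H1 H2]; split; [unfold dsym; simpl; rewrite H1; reflexivity | exact (IH _ H2)].
Qed.

Definition liftC (C D : catpres) (P : profpres C D) (a b : cp_sort C) (h : vpath C a b)
  : vpath (total P) (inl a) (inl b) :=
  exist _ (map csym (proj1_sig h)) (@valid_liftC C D P a _ b (proj2_sig h)).
Definition liftD (C D : catpres) (P : profpres C D) (a b : cp_sort D) (h : vpath D a b)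
  : vpath (total P) (inr a) (inr b) :=
  exist _ (map dsym (proj1_sig h)) (@valid_liftD C D P a _ b (proj2_sig h)).

Definition semP_obj (C D : catpres) (P : profpres C D) (c : cp_sort C) (d : cp_sort D) : Type :=
  sem_hom (total P) (inl c) (inr d).

Definition semP (C D : catpres) (P : profpres C D) : Prof (sem C) (sem D) :=
  @MkProf (sem C) (sem D) (semP_obj P)
    (fun c c' d d' (h : sem_hom C c' c) (k : sem_hom D d d') (x : semP_obj P c d) =>
       cls _ (vcat (vcat (liftC P (rep h)) (rep x)) (liftD P (rep k)))).

(* The composite presentation has the composable pairs (p,q) as generators.
   Since P and Q are nongenerative, a pair of cross-paths uP : c -> d, uQ : d -> e
   can be normalised: uP ~ p.g, then g.uQ ~ q.h, giving the right cross-path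
   (p,q).h.  The equations are those of the instance presentations of P and Q
   transported along this normalisation, plus f.(p,q) = its normal form, so the
   composite is nongenerative by construction, and conservativity of P and Q
   makes the normalisation respect provable equality.  Conversely s.(p,q).t
   denotes [s.p] (x) [q.t] in the coend; this denotation respects every equation
   of the total presentation and is inverse to the normalisation, which yields
   both the isomorphism with the composite profunctor and conservativity. *)

From Stdlib Require Import List Relations ClassicalEpsilon.
From Stdlib Require Import FunctionalExtensionality PropExtensionality ProofIrrelevance.
Import ListNotations.
Set Implicit Arguments.

Section Quotient.
Variables (X : Type) (R : X -> X -> Prop).

Lemma cls_eq (x y : X) : clos_refl_sym_trans X R x y -> cls R x = cls R y.
Proof.
  intro H. apply subset_eq_compat.
  apply functional_extensionality; intro z; apply propositional_extensionality; split; intro Hz.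
  - eapply rst_trans; [apply rst_sym; exact H | exact Hz].
  - eapply rst_trans; [exact H | exact Hz].
Qed.

Lemma cls_inj (x y : X) : cls R x = cls R y -> clos_refl_sym_trans X R x y.
Proof.
  intro H. apply (f_equal (@proj1_sig _ _)) in H. simpl in H.
  rewrite (equal_f H y). apply rst_refl.
Qed.

Lemma cls_rep (q : quot R) : cls R (rep q) = q.
Proof.
  destruct q as [A HA]. unfold rep; simpl.
  destruct (constructive_indefinite_description _ HA) as [x Hx]; simpl.
  apply subset_eq_compat. symmetry; exact Hx.
Qed.

Lemma rep_cls (x : X) : clos_refl_sym_trans X R (rep (cls R x)) x.
Proof. apply cls_inj. rewrite cls_rep. reflexivity. Qed.

End Quotient.

Section Paths.
Variable C : catpres.

Lemma peq_valid : catpres_wf C -> forall a b l l',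
  peq C a b l l' -> valid C a l b /\ valid C a l' b.
Proof.
  intros wf a b l l' H; induction H; simpl; try tauto.
  - apply wf; auto.
  - destruct IHpeq; split; eapply valid_cat; eauto; simpl; auto.
Qed.

Lemma peq_app_r t : forall a b c l l',
  peq C a b l l' -> valid C b t c -> peq C a c (l ++ t) (l' ++ t).
Proof.
  induction t as [|f t IH]; intros a b c l l' H Hv.
  - simpl in Hv; subst; rewrite !app_nil_r; auto.
  - destruct Hv as [<- Hv].
    replace (l ++ f :: t) with ((l ++ [f]) ++ t) by (rewrite <- app_assoc; reflexivity).
    replace (l' ++ f :: t) with ((l' ++ [f]) ++ t) by (rewrite <- app_assoc; reflexivity).
    eapply IH; [apply peq_post, H | exact Hv].
Qed.

Lemma peq_app_l s : forall a b c l l',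
  valid C a s b -> peq C b c l l' -> peq C a c (s ++ l) (s ++ l').
Proof.
  induction s as [|f s IH]; intros a b c l l' Hv H.
  - simpl in Hv; subst; exact H.
  - destruct Hv as [<- Hv]. apply peq_pre. eapply IH; eauto.
Qed.

Lemma peq_app : catpres_wf C -> forall a b c l1 l1' l2 l2',
  peq C a b l1 l1' -> peq C b c l2 l2' -> peq C a c (l1 ++ l2) (l1' ++ l2').
Proof.
  intros wf a b c l1 l1' l2 l2' H1 H2.
  destruct (peq_valid wf H1) as [_ V1]. destruct (peq_valid wf H2) as [V2 _].
  eapply peq_trans; [eapply peq_app_r | eapply peq_app_l]; eauto.
Qed.

Definition path_rel (a b : cp_sort C) (x y : vpath C a b) : Prop :=
  peq C a b (proj1_sig x) (proj1_sig y).

Lemma rst_path_rel a b (x y : vpath C a b) :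
  clos_refl_sym_trans _ (@path_rel a b) x y <-> peq C a b (proj1_sig x) (proj1_sig y).
Proof.
  split; intro H.
  - induction H.
    + exact H.
    + apply peq_refl. exact (proj2_sig x).
    + apply peq_sym; auto.
    + eapply peq_trans; eauto.
  - apply rst_step. exact H.
Qed.

Lemma cls_peq a b (x y : vpath C a b) :
  peq C a b (proj1_sig x) (proj1_sig y) -> cls (@path_rel a b) x = cls (@path_rel a b) y.
Proof. intro H. apply cls_eq, rst_path_rel, H. Qed.

Lemma rep_cls_peq a b (x : vpath C a b) :
  peq C a b (proj1_sig (rep (cls (@path_rel a b) x))) (proj1_sig x).
Proof. apply rst_path_rel, rep_cls. Qed.

Definition hom_of (a b : cp_sort C) (s : list (cp_fun C)) (H : valid C a s b) : sem_hom C a b :=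
  cls (@path_rel a b) (exist _ s H).

Lemma hom_of_irr a b s s' H H' : s = s' -> @hom_of a b s H = @hom_of a b s' H'.
Proof. intros <-. f_equal. apply proof_irrelevance. Qed.

Lemma hom_of_rep a b (h : sem_hom C a b) : h = @hom_of a b (proj1_sig (rep h)) (proj2_sig (rep h)).
Proof. unfold hom_of. rewrite <- (cls_rep h) at 1. f_equal. destruct (rep h); reflexivity. Qed.

Lemma idm_hom_of a : @idm (sem C) a = @hom_of a a nil eq_refl.
Proof. reflexivity. Qed.

Lemma rep_idm a : peq C a a (proj1_sig (rep (@idm (sem C) a))) nil.
Proof. exact (rep_cls_peq (exist (fun l => valid C a l a) nil eq_refl)). Qed.

End Paths.

Arguments hom_of {C a b s} H.

Section TotalPresentation.
Variables (C D : catpres) (P : profpres C D).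
Hypotheses (wfC : catpres_wf C) (wfD : catpres_wf D) (wfP : profpres_wf P).

Lemma total_wf : catpres_wf (total P).
Proof.
  intros a b l l' H. simpl in H. unfold t_eq in H.
  destruct H as [[c [c' [k [k' [-> [-> [-> [-> H]]]]]]]] |
      [[d [d' [k [k' [-> [-> [-> [-> H]]]]]]]] | [c [d [-> [-> H]]]]]].
  - destruct (wfC _ _ _ _ H); split; apply valid_liftC; auto.
  - destruct (wfD _ _ _ _ H); split; apply valid_liftD; auto.
  - apply (wfP _ _ _ _ H).
Qed.

Lemma peq_liftC a b k k' : peq C a b k k' ->
  peq (total P) (inl a) (inl b) (map (@csym C D P) k) (map (@csym C D P) k').
Proof.
  intro H; induction H.
  - apply peq_refl. apply valid_liftC; auto.
  - apply peq_ax. simpl. left. exists a, b, l, l'. repeat split; auto.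
  - apply peq_sym; auto.
  - eapply peq_trans; eauto.
  - simpl. exact (@peq_pre (total P) (csym f) _ _ _ IHpeq).
  - rewrite !map_app. exact (@peq_post (total P) _ (csym f) _ _ IHpeq).
Qed.

Lemma peq_liftD a b k k' : peq D a b k k' ->
  peq (total P) (inr a) (inr b) (map (@dsym C D P) k) (map (@dsym C D P) k').
Proof.
  intro H; induction H.
  - apply peq_refl. apply valid_liftD; auto.
  - apply peq_ax. simpl. right; left. exists a, b, l, l'. repeat split; auto.
  - apply peq_sym; auto.
  - eapply peq_trans; eauto.
  - simpl. exact (@peq_pre (total P) (dsym f) _ _ _ IHpeq).
  - rewrite !map_app. exact (@peq_post (total P) _ (dsym f) _ _ IHpeq).
Qed.

Lemma valid_inr_inr a u b : valid (total P) (inr a) u (inr b) ->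
  exists g, u = map (@dsym C D P) g /\ valid D a g b.
Proof.
  revert a; induction u as [|x u IH]; simpl; intros a H.
  - exists nil. inversion H; subst; simpl; auto.
  - destruct H as [H1 H2].
    destruct x as [f|[p|g]]; simpl in H1; try discriminate.
    inversion H1; subst. destruct (IH _ H2) as [g' [-> Hg]].
    exists (g :: g'). simpl. auto.
Qed.

Lemma not_valid_inr_inl a u b : ~ valid (total P) (inr a) u (inl b).
Proof.
  revert a; induction u as [|x u IH]; simpl; intros a H.
  - discriminate.
  - destruct H as [H1 H2]. destruct x as [f|[p|g]]; simpl in H1; try discriminate.
    eapply IH; eauto.
Qed.

Lemma valid_inl_inl a u b : valid (total P) (inl a) u (inl b) ->
  exists s, u = map (@csym C D P) s /\ valid C a s b.
Proof.
  revert a; induction u as [|x u IH]; simpl; intros a H.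
  - exists nil. inversion H; subst; simpl; auto.
  - destruct H as [H1 H2].
    destruct x as [f|[p|g]]; simpl in H1, H2; try discriminate.
    + inversion H1; subst. destruct (IH _ H2) as [s [-> Hs]].
      exists (f :: s). simpl. auto.
    + exfalso; eapply not_valid_inr_inl; eauto.
Qed.

Lemma cross_path_decomp c u d : valid (total P) (inl c) u (inr d) ->
  exists s p g, u = map (@csym C D P) s ++ inr (inl p) :: map (@dsym C D P) g /\
    valid C c s (pp_src P p) /\ valid D (pp_tgt P p) g d.
Proof.
  revert c; induction u as [|x u IH]; simpl; intros c H.
  - discriminate.
  - destruct H as [H1 H2].
    destruct x as [f|[p|g]]; simpl in H1, H2; try discriminate.
    + inversion H1; subst. destruct (IH _ H2) as [s [p [g [-> [Hs Hg]]]]].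
      exists (f :: s), p, g. simpl. auto.
    + inversion H1; subst. destruct (valid_inr_inr _ _ _ H2) as [g [-> Hg]].
      exists nil, p, g. simpl. auto.
Qed.

Lemma cross_path_decomp_unique s p g s' p' g' :
  map (@csym C D P) s ++ inr (inl p) :: map (@dsym C D P) g =
  map (@csym C D P) s' ++ inr (inl p') :: map (@dsym C D P) g' -> s = s' /\ p = p' /\ g = g'.
Proof.
  revert s'; induction s as [|f s IH]; intros [|f' s'] H; simpl in H.
  - injection H. intros. subst. split; auto. split; auto. clear H. revert g' H0.
    induction g as [|x g IHg]; intros [|y g2] Hg; simpl in Hg; try discriminate; auto.
    inversion Hg; subst. f_equal. auto.
  - discriminate.
  - discriminate.
  - inversion H; subst. destruct (IH _ H2) as [-> [-> ->]]; auto.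
Qed.

Lemma rcp_valid c d t : is_rcp P c d t -> valid (total P) (inl c) t (inr d).
Proof.
  intros [p [g [H1 [H2 ->]]]]. simpl. split; [subst; reflexivity|].
  apply valid_liftD; auto.
Qed.

Lemma rcp_app c a b t h : is_rcp P c a t -> valid D a h b -> is_rcp P c b (t ++ map (@dsym C D P) h).
Proof.
  intros [p [g [H1 [H2 ->]]]] Hh. exists p, (g ++ h). split; auto. split.
  - eapply valid_cat; eauto.
  - simpl. rewrite map_app. reflexivity.
Qed.

Lemma inst_eq_rcp c d t t' : inst_eq P c d t t' -> is_rcp P c d t /\ is_rcp P c d t'.
Proof.
  intro H; induction H; try tauto.
  - destruct IHinst_eq; split.
    + change (l ++ [dsym g]) with (l ++ map (@dsym C D P) [g]).
      apply rcp_app with (a := cp_src D g); simpl; auto.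
    + change (l' ++ [dsym g]) with (l' ++ map (@dsym C D P) [g]).
      apply rcp_app with (a := cp_src D g); simpl; auto.
  - destruct (wfD _ _ _ _ H0). split; apply rcp_app with (a := a); auto.
Qed.

Lemma inst_eq_sound c d t t' : inst_eq P c d t t' -> peq (total P) (inl c) (inr d) t t'.
Proof.
  intro H; induction H.
  - apply peq_ax. simpl. right; right. exists c, d. auto.
  - apply peq_refl. apply rcp_valid; auto.
  - apply peq_sym; auto.
  - eapply peq_trans; eauto.
  - exact (@peq_post (total P) _ (dsym g) _ _ IHinst_eq).
  - apply peq_app_l with (b := inr a). apply rcp_valid; auto.
    apply peq_liftD. apply peq_ax. auto.
Qed.

Lemma inst_eq_app c a t t' h : forall b, inst_eq P c a t t' -> valid D a h b ->
  inst_eq P c b (t ++ map (@dsym C D P) h) (t' ++ map (@dsym C D P) h).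
Proof.
  revert a t t'; induction h as [|g h IH]; intros a t t' b H Hv.
  - simpl in Hv; subst; simpl; rewrite !app_nil_r; auto.
  - simpl in Hv; destruct Hv as [H1 H2]. subst a.
    apply ie_post in H.
    replace (t ++ map dsym (g :: h)) with ((t ++ [dsym g]) ++ map dsym h)
      by (simpl; rewrite <- app_assoc; reflexivity).
    replace (t' ++ map dsym (g :: h)) with ((t' ++ [dsym g]) ++ map dsym h)
      by (simpl; rewrite <- app_assoc; reflexivity).
    eapply IH; eauto.
Qed.

Hypothesis ng : nongenerative P.

Lemma rcp_pre_nf c' d s : forall c, valid C c s c' -> forall t, is_rcp P c' d t ->
  exists t', is_rcp P c d t' /\ peq (total P) (inl c) (inr d) (map (@csym C D P) s ++ t) t'.
Proof.
  induction s as [|f s IH]; intros c Hs t Ht.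
  - simpl in Hs; subst. exists t; split; auto. apply peq_refl. apply rcp_valid; auto.
  - simpl in Hs. destruct Hs as [H1 H2]. subst c.
    destruct (IH _ H2 _ Ht) as [t1 [Ht1 Hp1]].
    destruct Ht1 as [p1 [g1 [E1 [V1 ->]]]].
    destruct (ng f p1 (eq_sym E1)) as [t2 [Ht2 Hp2]].
    exists (t2 ++ map dsym g1). split.
    + eapply rcp_app; eauto.
    + simpl. eapply peq_trans.
      * exact (@peq_pre (total P) (csym f) _ _ _ Hp1).
      * change (csym f :: inr (inl p1) :: map dsym g1) with ([csym f; inr (inl p1)] ++ map dsym g1).
        eapply peq_app_r; eauto. apply valid_liftD; auto.
Qed.

Lemma nongenerative_nf c d u : valid (total P) (inl c) u (inr d) ->
  exists t, is_rcp P c d t /\ peq (total P) (inl c) (inr d) u t.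
Proof.
  intro H. destruct (cross_path_decomp _ _ _ H) as [s [p [g [-> [Hs Hg]]]]].
  apply rcp_pre_nf with (c' := pp_src P p); auto.
  exists p, g. auto.
Qed.

Definition nf (c : cp_sort C) (d : cp_sort D) (u : list (tsym P)) : list (tsym P) :=
  match excluded_middle_informative (exists t, is_rcp P c d t /\ peq (total P) (inl c) (inr d) u t) with
  | left H => proj1_sig (constructive_indefinite_description _ H)
  | right _ => u
  end.

Lemma nf_spec c d u : valid (total P) (inl c) u (inr d) ->
  is_rcp P c d (nf c d u) /\ peq (total P) (inl c) (inr d) u (nf c d u).
Proof.
  intro H. unfold nf.
  destruct (excluded_middle_informative _) as [H1|H1].
  - exact (proj2_sig (constructive_indefinite_description _ H1)).
  - exfalso. apply H1, nongenerative_nf, H.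
Qed.

End TotalPresentation.

Arguments nf {C D} P c d u.

Definition dsyms (C D : catpres) (P : profpres C D) (l : list (tsym P)) : list (cp_fun D) :=
  flat_map (fun s : tsym P => match s with inr (inr g) => [g] | _ => [] end) l.
Arguments dsyms {C D} P l.

Lemma dsyms_map (C D : catpres) (P : profpres C D) g : dsyms P (map (@dsym C D P) g) = g.
Proof. induction g; simpl; auto. rewrite IHg; auto. Qed.

Lemma semP_act_cls (C D : catpres) (P : profpres C D) :
  catpres_wf C -> catpres_wf D -> profpres_wf P ->
  forall c c' d d' s Hs g Hg u Hu H,
  @pact _ _ (semP P) c c' d d' (@hom_of C c' c s Hs) (@hom_of D d d' g Hg)
     (cls (@path_rel (total P) (inl c) (inr d)) (exist _ u Hu)) =
  cls (@path_rel (total P) (inl c') (inr d'))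
    (exist _ (map (@csym C D P) s ++ u ++ map (@dsym C D P) g) H).
Proof.
  intros wfC wfD wfP c c' d d' s Hs g Hg u Hu H. simpl. apply cls_peq. simpl.
  rewrite app_assoc.
  assert (wfT := total_wf wfC wfD wfP).
  apply (peq_app wfT) with (b := inr d).
  - apply (peq_app wfT) with (b := inl c).
    + apply peq_liftC. exact (rep_cls_peq (exist _ s Hs)).
    + exact (rep_cls_peq (exist (fun l => valid (total P) (inl c) l (inr d)) u Hu)).
  - apply peq_liftD. exact (rep_cls_peq (exist _ g Hg)).
Qed.

Section Transport.
Variables (C D : catpres) (P : profpres C D) (PP : Prof (sem C) (sem D)).
Variable al : forall a b, pobj PP a b -> pobj (semP P) a b.
Hypothesis bij : forall a b, exists be : pobj (semP P) a b -> pobj PP a b,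
        (forall x, be (al a b x) = x) /\ (forall y, al a b (be y) = y).
Hypothesis nat : forall a a' b b' (h : hom (sem C) a' a) (k : hom (sem D) b b') (x : pobj PP a b),
        al a' b' (pact PP h k x) = pact (semP P) h k (al a b x).
Hypotheses (wfC : catpres_wf C) (wfD : catpres_wf D) (wfP : profpres_wf P).

Lemma al_inj a b (x y : pobj PP a b) : al a b x = al a b y -> x = y.
Proof.
  intro H. destruct (bij a b) as [be [H1 _]]. rewrite <- (H1 x), <- (H1 y), H. reflexivity.
Qed.

Lemma al_surj a b (y : pobj (semP P) a b) : exists x, al a b x = y.
Proof. destruct (bij a b) as [be [_ H2]]. exists (be y). auto. Qed.

Definition al_inv a b (y : pobj (semP P) a b) : pobj PP a b :=
  proj1_sig (constructive_indefinite_description _ (al_surj y)).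

Lemma al_inv_r a b y : al a b (@al_inv a b y) = y.
Proof. exact (proj2_sig (constructive_indefinite_description _ (al_surj y))). Qed.

Lemma al_inv_l a b x : @al_inv a b (al a b x) = x.
Proof. apply al_inj, al_inv_r. Qed.

Definition elt_of_path a b (l : list (tsym P)) (H : valid (total P) (inl a) l (inr b)) : pobj PP a b :=
  @al_inv a b (cls (@path_rel (total P) (inl a) (inr b)) (exist _ l H)).

Arguments elt_of_path {a b} l H.

Definition path_of a b (x : pobj PP a b) : list (tsym P) := proj1_sig (rep (al a b x)).
Arguments path_of {a b} x.

Lemma path_of_valid a b (x : pobj PP a b) : valid (total P) (inl a) (path_of x) (inr b).
Proof. exact (proj2_sig (rep (al a b x))). Qed.
Arguments path_of_valid {a b} x.

Lemma elt_of_path_peq a b l l' H H' :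
  peq (total P) (inl a) (inr b) l l' -> @elt_of_path a b l H = @elt_of_path a b l' H'.
Proof. intro E. unfold elt_of_path. f_equal. apply cls_peq, E. Qed.

Lemma elt_of_path_irr a b l l' H H' : l = l' -> @elt_of_path a b l H = @elt_of_path a b l' H'.
Proof. intros <-. f_equal. apply proof_irrelevance. Qed.

Lemma elt_of_path_of a b (x : pobj PP a b) H : @elt_of_path a b (path_of x) H = x.
Proof.
  rewrite <- (al_inv_l a b x) at 2. unfold elt_of_path. f_equal.
  rewrite <- (cls_rep (al a b x)). f_equal. unfold path_of in *.
  revert H. generalize (rep (al a b x)). intros [l Hl] H. simpl in *. f_equal. apply proof_irrelevance.
Qed.

Lemma path_of_elt_of_path a b l H : peq (total P) (inl a) (inr b) (path_of (@elt_of_path a b l H)) l.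
Proof.
  unfold path_of, elt_of_path. rewrite al_inv_r.
  apply (rep_cls_peq (exist (fun l => valid (total P) (inl a) l (inr b)) l H)).
Qed.

Lemma elt_of_path_act a a' b b' s Hs g Hg u Hu l H :
  l = map (@csym C D P) s ++ u ++ map (@dsym C D P) g ->
  pact PP (@hom_of C a' a s Hs) (@hom_of D b b' g Hg) (@elt_of_path a b u Hu) = @elt_of_path a' b' l H.
Proof.
  intros ->. apply al_inj. rewrite nat. unfold elt_of_path. rewrite !al_inv_r.
  apply semP_act_cls; auto.
Qed.

Lemma path_of_act a a' b b' (h : hom (sem C) a' a) (k : hom (sem D) b b') (x : pobj PP a b) :
  peq (total P) (inl a') (inr b') (path_of (pact PP h k x))
    (map (@csym C D P) (proj1_sig (rep h)) ++ path_of x ++ map (@dsym C D P) (proj1_sig (rep k))).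
Proof.
  assert (V : valid (total P) (inl a')
    (map (@csym C D P) (proj1_sig (rep h)) ++ path_of x ++ map (@dsym C D P) (proj1_sig (rep k)))
      (inr b')).
  { eapply valid_cat; [apply valid_liftC; exact (proj2_sig (rep h))|].
    eapply valid_cat; [apply path_of_valid | apply valid_liftD; exact (proj2_sig (rep k))]. }
  replace (pact PP h k x) with (elt_of_path _ V); [apply path_of_elt_of_path|].
  symmetry.
  transitivity (pact PP (hom_of (proj2_sig (rep h))) (hom_of (proj2_sig (rep k)))
                 (elt_of_path _ (path_of_valid x))).
  - rewrite <- !hom_of_rep, elt_of_path_of. reflexivity.
  - apply elt_of_path_act. reflexivity.
Qed.

Lemma path_of_act_l a a' b (h : hom (sem C) a' a) (x : pobj PP a b) :
  peq (total P) (inl a') (inr b) (path_of (pact PP h (idm b) x))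
    (map (@csym C D P) (proj1_sig (rep h)) ++ path_of x).
Proof.
  assert (Vh := @valid_liftC _ _ P _ _ _ (proj2_sig (rep h))).
  assert (H : peq (total P) (inl a') (inr b)
      ((map (@csym C D P) (proj1_sig (rep h)) ++ path_of x) ++ map (@dsym C D P)
          (proj1_sig (rep (idm b))))
      ((map (@csym C D P) (proj1_sig (rep h)) ++ path_of x) ++ map (@dsym C D P) nil)).
  { eapply peq_app_l; [eapply valid_cat; [exact Vh | apply path_of_valid]|].
    exact (peq_liftD P (rep_idm D b)). }
  simpl in H. rewrite app_nil_r, <- app_assoc in H.
  eapply peq_trans; [apply path_of_act | exact H].
Qed.

Lemma path_of_act_r a b b' (k : hom (sem D) b b') (x : pobj PP a b) :
  peq (total P) (inl a) (inr b') (path_of (pact PP (idm a) k x))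
    (path_of x ++ map (@dsym C D P) (proj1_sig (rep k))).
Proof.
  eapply peq_trans; [apply path_of_act|].
  rewrite app_assoc. eapply peq_app_r; [|apply valid_liftD; exact (proj2_sig (rep k))].
  change (path_of x) with (map (@csym C D P) nil ++ path_of x) at 2.
  eapply peq_app_r; [exact (peq_liftC P (rep_idm C a)) | apply path_of_valid].
Qed.

End Transport.

Arguments elt_of_path {C D P} PP al bij {a b} l H.
Arguments path_of {C D P} PP al {a b} x.
Arguments path_of_valid {C D P} PP al {a b} x.

Section CompositePresentation.
Variables (C D E : catpres) (P : profpres C D) (Q : profpres D E).

Definition pair_sym : Type := {x : (pp_fun P * pp_fun Q)%type | pp_tgt P (fst x) = pp_src Q (snd x)}.
Definition pair_src (r : pair_sym) : cp_sort C := pp_src P (fst (proj1_sig r)).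
Definition pair_tgt (r : pair_sym) : cp_sort E := pp_tgt Q (snd (proj1_sig r)).
Definition comp_tsym : Type := (cp_fun C + (pair_sym + cp_fun E))%type.

(* [pair_rcp], [prefix_rcp] and [compose_rcp] return the junk value [nil] on
   arguments that do not compose (incompatible pair, or not a right cross-path). *)
Definition pair_rcp (p : pp_fun P) (q : pp_fun Q) (h : list (cp_fun E)) : list comp_tsym :=
  match excluded_middle_informative (pp_tgt P p = pp_src Q q) with
  | left H => inr (inl (exist _ (p, q) H)) :: map (fun g => inr (inr g)) h
  | right _ => nil end.

Definition prefix_rcp (p : pp_fun P) (t : list (tsym Q)) : list comp_tsym :=
  match t with inr (inl q) :: rest => pair_rcp p q (dsyms Q rest) | _ => nil end.

Definition compose_rcp (l : list (tsym P)) (e : cp_sort E) (uQ : list (tsym Q)) : list comp_tsym :=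
  match l with
  | inr (inl p) :: _ => prefix_rcp p (nf Q (pp_tgt P p) e (map (@csym D E Q) (dsyms P l) ++ uQ))
  | _ => nil end.

Definition compose_paths (c : cp_sort C) (d : cp_sort D) (e : cp_sort E)
  (uP : list (tsym P)) (uQ : list (tsym Q)) : list comp_tsym :=
  compose_rcp (nf P c d uP) e uQ.

Definition eqn_of_P (x : (cp_sort C * cp_sort D * list (tsym P) * list (tsym P))%type) (q : pp_fun Q)
  : (cp_sort C * cp_sort E * list comp_tsym * list comp_tsym)%type :=
  let '(c, d, l0, l0') := x in
  (c, pp_tgt Q q, compose_rcp l0 (pp_tgt Q q) [inr (inl q)], compose_rcp l0' (pp_tgt Q q) [inr (inl q)]).

Definition eqn_of_Q (y : (cp_sort D * cp_sort E * list (tsym Q) * list (tsym Q))%type) (p : pp_fun P)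
  : (cp_sort C * cp_sort E * list comp_tsym * list comp_tsym)%type :=
  let '(d, e, m, m') := y in (pp_src P p, e, prefix_rcp p m, prefix_rcp p m').

Definition eqn_of_left (f : cp_fun C) (r : pair_sym)
  : (cp_sort C * cp_sort E * list comp_tsym * list comp_tsym)%type :=
  let '(p, q) := proj1_sig r in
  (cp_src C f, pp_tgt Q q, [inl f; inr (inl r)],
   compose_paths (cp_src C f) (pp_tgt P p) (pp_tgt Q q) [inl f; inr (inl p)] [inr (inl q)]).

(* The equations of P^c composed with every q, those of Q^d prefixed by every p,
   and one equation putting each short left cross-path f.(p,q) into normal form,
   which makes the composite nongenerative by fiat. *)
Definition comp_eq (c : cp_sort C) (e : cp_sort E) (l l' : list comp_tsym) : Prop :=
  (exists d l0 l0' q, pp_eq P c d l0 l0' /\ is_rcp P c d l0 /\ is_rcp P c d l0' /\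
      pp_src Q q = d /\ eqn_of_P (c, d, l0, l0') q = (c, e, l, l')) \/
  (exists d m m' p, pp_eq Q d e m m' /\ is_rcp Q d e m /\ is_rcp Q d e m' /\
      pp_tgt P p = d /\ eqn_of_Q (d, e, m, m') p = (c, e, l, l')) \/
  (exists f r, cp_tgt C f = pair_src r /\ eqn_of_left f r = (c, e, l, l')).

Definition comp_pres : profpres C E := @ProfPres C E pair_sym pair_src pair_tgt comp_eq.

Lemma pair_rcp_eq p q h (H : pp_tgt P p = pp_src Q q) :
  pair_rcp p q h = inr (inl (exist _ (p, q) H)) :: map (@dsym C E comp_pres) h.
Proof.
  unfold pair_rcp. destruct (excluded_middle_informative _) as [H'|H'].
  - replace H' with H by apply proof_irrelevance. reflexivity.
  - contradiction.
Qed.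

Lemma pair_rcp_app p q h k : pp_tgt P p = pp_src Q q ->
  pair_rcp p q (h ++ k) = pair_rcp p q h ++ map (@dsym C E comp_pres) k.
Proof. intro H. rewrite !(pair_rcp_eq _ _ _ H). simpl. rewrite map_app. reflexivity. Qed.

Lemma prefix_rcp_cons p q h : prefix_rcp p (inr (inl q) :: map (@dsym D E Q) h) = pair_rcp p q h.
Proof. simpl. rewrite dsyms_map. reflexivity. Qed.

Lemma pair_rcp_is_rcp p q h e : pp_tgt P p = pp_src Q q -> valid E (pp_tgt Q q) h e ->
  is_rcp comp_pres (pp_src P p) e (pair_rcp p q h).
Proof.
  intros H Hh. rewrite (pair_rcp_eq _ _ _ H). exists (exist _ (p, q) H), h. simpl. auto.
Qed.

Lemma prefix_rcp_is_rcp p d e t : pp_tgt P p = d -> is_rcp Q d e t ->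
  is_rcp comp_pres (pp_src P p) e (prefix_rcp p t).
Proof.
  intros Hp [q [h [H1 [H2 ->]]]]. rewrite prefix_rcp_cons. apply pair_rcp_is_rcp; congruence.
Qed.

Lemma prefix_rcp_app p d a t k : pp_tgt P p = d -> is_rcp Q d a t ->
  prefix_rcp p (t ++ map (@dsym D E Q) k) = prefix_rcp p t ++ map (@dsym C E comp_pres) k.
Proof.
  intros Hp [q [h [H1 [H2 ->]]]]. simpl. rewrite <- map_app, !dsyms_map.
  apply pair_rcp_app. congruence.
Qed.

Hypotheses (wfC : catpres_wf C) (wfD : catpres_wf D) (wfE : catpres_wf E)
  (wfP : profpres_wf P) (wfQ : profpres_wf Q) (cuP : curryable P) (cuQ : curryable Q).

Let wfTP := total_wf wfC wfD wfP.
Let wfTQ := total_wf wfD wfE wfQ.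

Lemma nfQ_spec d e u : valid (total Q) (inl d) u (inr e) ->
  is_rcp Q d e (nf Q d e u) /\ peq (total Q) (inl d) (inr e) u (nf Q d e u).
Proof. apply nf_spec; auto. apply cuQ. Qed.

Lemma nfP_spec c d u : valid (total P) (inl c) u (inr d) ->
  is_rcp P c d (nf P c d u) /\ peq (total P) (inl c) (inr d) u (nf P c d u).
Proof. apply nf_spec; auto. apply cuP. Qed.

Lemma inst_eq_prefix d e t t' : inst_eq Q d e t t' -> forall p, pp_tgt P p = d ->
  inst_eq comp_pres (pp_src P p) e (prefix_rcp p t) (prefix_rcp p t').
Proof.
  intro H; induction H; intros p Hp.
  - apply ie_ax.
    + simpl. right; left. exists d, l, l', p. repeat split; auto.
    + eapply prefix_rcp_is_rcp; eauto.
    + eapply prefix_rcp_is_rcp; eauto.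
  - apply ie_refl. eapply prefix_rcp_is_rcp; eauto.
  - apply ie_sym; auto.
  - eapply ie_trans; eauto.
  - destruct (inst_eq_rcp wfE H) as [H1 H2].
    change (l ++ [dsym g]) with (l ++ map (@dsym D E Q) [g]).
    change (l' ++ [dsym g]) with (l' ++ map (@dsym D E Q) [g]).
    rewrite (prefix_rcp_app p [g] Hp H1), (prefix_rcp_app p [g] Hp H2).
    simpl. apply ie_post. exact (IHinst_eq p Hp).
  - rewrite (prefix_rcp_app p k Hp H), (prefix_rcp_app p k' Hp H).
    eapply ie_deq; eauto. eapply prefix_rcp_is_rcp; eauto.
Qed.

Lemma peq_rcp_prefix p d e t t' : pp_tgt P p = d -> is_rcp Q d e t -> is_rcp Q d e t' ->
  peq (total Q) (inl d) (inr e) t t' -> inst_eq comp_pres (pp_src P p) e (prefix_rcp p t)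
    (prefix_rcp p t').
Proof. intros Hp H1 H2 H3. apply inst_eq_prefix with (d := d); auto. apply cuQ; auto. Qed.

Lemma prefix_rcp_nf_peq p e u u' : valid (total Q) (inl (pp_tgt P p)) u (inr e) ->
  peq (total Q) (inl (pp_tgt P p)) (inr e) u u' ->
  inst_eq comp_pres (pp_src P p) e (prefix_rcp p (nf Q (pp_tgt P p) e u))
    (prefix_rcp p (nf Q (pp_tgt P p) e u')).
Proof.
  intros Hv Hp. destruct (peq_valid wfTQ Hp) as [_ Hv'].
  destruct (nfQ_spec _ _ _ Hv) as [R1 P1]. destruct (nfQ_spec _ _ _ Hv') as [R2 P2].
  apply peq_rcp_prefix with (d := pp_tgt P p); auto.
  eapply peq_trans; [apply peq_sym; exact P1|]. eapply peq_trans; [exact Hp| exact P2].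
Qed.

Lemma compose_rcp_cons p g e uQ :
  compose_rcp (inr (inl p) :: map (@dsym C D P) g) e uQ =
  prefix_rcp p (nf Q (pp_tgt P p) e (map (@csym D E Q) g ++ uQ)).
Proof. simpl. rewrite dsyms_map. reflexivity. Qed.

Lemma compose_rcp_app c d l k e uQ : is_rcp P c d l ->
  compose_rcp (l ++ map (@dsym C D P) k) e uQ = compose_rcp l e (map (@csym D E Q) k ++ uQ).
Proof.
  intros [p [g [H1 [H2 ->]]]]. simpl app. rewrite <- map_app, !compose_rcp_cons.
  rewrite map_app, app_assoc. reflexivity.
Qed.

Lemma compose_rcp_is_rcp c d l e uQ : is_rcp P c d l -> valid (total Q) (inl d) uQ (inr e) ->
  is_rcp comp_pres c e (compose_rcp l e uQ).
Proof.
  intros [p [g [H1 [H2 ->]]]] Hv. rewrite compose_rcp_cons. subst c.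
  eapply prefix_rcp_is_rcp; [reflexivity|]. apply nfQ_spec.
  eapply valid_cat; [apply valid_liftC; exact H2| exact Hv].
Qed.

Lemma compose_rcp_peq c d l e u u' : is_rcp P c d l -> valid (total Q) (inl d) u (inr e) ->
  peq (total Q) (inl d) (inr e) u u' -> inst_eq comp_pres c e (compose_rcp l e u) (compose_rcp l e u').
Proof.
  intros [p [g [H1 [H2 ->]]]] Hv Hp. rewrite !compose_rcp_cons. subst c.
  apply prefix_rcp_nf_peq.
  - eapply valid_cat; [apply valid_liftC; exact H2| exact Hv].
  - eapply peq_app_l; [apply valid_liftC; exact H2| exact Hp].
Qed.

Lemma compose_rcp_split c d l e uQ q h : is_rcp P c d l -> valid (total Q) (inl d) uQ (inr e) ->
  nf Q d e uQ = inr (inl q) :: map (@dsym D E Q) h -> pp_src Q q = d -> valid E (pp_tgt Q q) h e ->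
  inst_eq comp_pres c e (compose_rcp l e uQ)
    (compose_rcp l (pp_tgt Q q) [inr (inl q)] ++ map (@dsym C E comp_pres) h).
Proof.
  intros Hl Hv Hnf Hq Hh.
  destruct Hl as [p [g [H1 [H2 ->]]]]. rewrite !compose_rcp_cons. subst c.
  assert (Vg : valid (total Q) (inl (pp_tgt P p)) (map (@csym D E Q) g) (inl d))
    by (apply valid_liftC; exact H2).
  assert (Vq : valid (total Q) (inl d) [inr (inl q)] (inr (pp_tgt Q q)))
    by (simpl; split; [rewrite Hq|]; reflexivity).
  assert (Vgq : valid (total Q) (inl (pp_tgt P p)) (map (@csym D E Q) g ++ [inr (inl q)])
      (inr (pp_tgt Q q))) by (eapply valid_cat; eauto).
  destruct (nfQ_spec _ _ _ Vgq) as [R1 P1].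
  rewrite <- (prefix_rcp_app p h eq_refl R1).
  assert (Vgu : valid (total Q) (inl (pp_tgt P p)) (map (@csym D E Q) g ++ uQ) (inr e)) by
    (eapply valid_cat; eauto).
  destruct (nfQ_spec _ _ _ Vgu) as [R2 P2].
  destruct (nfQ_spec _ _ _ Hv) as [_ P3]. rewrite Hnf in P3.
  apply peq_rcp_prefix with (d := pp_tgt P p); auto.
  - eapply rcp_app; eauto.
  - eapply peq_trans; [apply peq_sym; exact P2|].
    eapply peq_trans; [eapply peq_app_l; [exact Vg| exact P3]|].
    assert (X : peq (total Q) (inl (pp_tgt P p)) (inr e)
      ((map (@csym D E Q) g ++ [inr (inl q)]) ++ map (@dsym D E Q) h)
      (nf Q (pp_tgt P p) (pp_tgt Q q) (map csym g ++ [inr (inl q)]) ++ map (@dsym D E Q) h)).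
    { eapply peq_app_r; [exact P1|]. apply valid_liftD; auto. }
    rewrite <- app_assoc in X. exact X.
Qed.

Lemma inst_eq_compose_rcp c d l l' : inst_eq P c d l l' ->
  forall e uQ, valid (total Q) (inl d) uQ (inr e) ->
  inst_eq comp_pres c e (compose_rcp l e uQ) (compose_rcp l' e uQ).
Proof.
  intro H; induction H; intros e uQ Hv.
  - destruct (nfQ_spec _ _ _ Hv) as [[q [h [Hq [Hh Hnf]]]] _].
    eapply ie_trans; [eapply compose_rcp_split; eauto|].
    eapply ie_trans; [|apply ie_sym; eapply compose_rcp_split; eauto].
    eapply inst_eq_app; eauto.
    apply ie_ax.
    + simpl. left. exists d, l, l', q. repeat split; auto.
    + eapply compose_rcp_is_rcp; eauto. simpl. split; [rewrite Hq|]; reflexivity.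
    + eapply compose_rcp_is_rcp; eauto. simpl. split; [rewrite Hq|]; reflexivity.
  - apply ie_refl. eapply compose_rcp_is_rcp; eauto.
  - apply ie_sym; auto.
  - eapply ie_trans; eauto.
  - destruct (inst_eq_rcp wfD H) as [H1 H2].
    change (l ++ [dsym g]) with (l ++ map (@dsym C D P) [g]).
    change (l' ++ [dsym g]) with (l' ++ map (@dsym C D P) [g]).
    rewrite (compose_rcp_app [g] e uQ H1), (compose_rcp_app [g] e uQ H2).
    apply IHinst_eq. simpl. auto.
  - rewrite (compose_rcp_app k e uQ H), (compose_rcp_app k' e uQ H).
    destruct (wfD _ _ _ _ H0) as [Vk Vk'].
    apply compose_rcp_peq with (d := a); auto.
    + eapply valid_cat; [apply valid_liftC; exact Vk| exact Hv].
    + eapply peq_app_r; [|exact Hv]. apply peq_liftC. apply peq_ax. exact H0.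
Qed.

Lemma compose_paths_is_rcp c d e uP uQ :
  valid (total P) (inl c) uP (inr d) -> valid (total Q) (inl d) uQ (inr e) ->
  is_rcp comp_pres c e (compose_paths c d e uP uQ).
Proof. intros H1 H2. unfold compose_paths. eapply compose_rcp_is_rcp; eauto. apply nfP_spec; auto. Qed.

Lemma compose_paths_peq_l c d e uP uP' uQ : peq (total P) (inl c) (inr d) uP uP' ->
  valid (total Q) (inl d) uQ (inr e) -> inst_eq comp_pres c e (compose_paths c d e uP uQ)
    (compose_paths c d e uP' uQ).
Proof.
  intros H Hv. destruct (peq_valid wfTP H) as [V1 V2].
  destruct (nfP_spec _ _ _ V1) as [R1 P1]. destruct (nfP_spec _ _ _ V2) as [R2 P2].
  unfold compose_paths. apply inst_eq_compose_rcp with (d := d); auto.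
  apply cuP; auto.
  eapply peq_trans; [apply peq_sym; exact P1|]. eapply peq_trans; [exact H|exact P2].
Qed.

Lemma compose_paths_peq_r c d e uP uQ uQ' : valid (total P) (inl c) uP (inr d) ->
  peq (total Q) (inl d) (inr e) uQ uQ' -> inst_eq comp_pres c e (compose_paths c d e uP uQ)
    (compose_paths c d e uP uQ').
Proof.
  intros Hv H. destruct (peq_valid wfTQ H) as [V1 V2]. unfold compose_paths.
  eapply compose_rcp_peq; eauto. apply nfP_spec; auto.
Qed.

Lemma compose_paths_slide c d' d e uP g uQ : valid (total P) (inl c) uP (inr d') -> valid D d' g d ->
  valid (total Q) (inl d) uQ (inr e) ->
  inst_eq comp_pres c e (compose_paths c d e (uP ++ map (@dsym C D P) g) uQ)
    (compose_paths c d' e uP (map (@csym D E Q) g ++ uQ)).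
Proof.
  intros H1 H2 H3. unfold compose_paths.
  destruct (nfP_spec _ _ _ H1) as [R1 P1].
  assert (V : valid (total P) (inl c) (uP ++ map (@dsym C D P) g) (inr d))
    by (eapply valid_cat; [exact H1| apply valid_liftD; exact H2]).
  destruct (nfP_spec _ _ _ V) as [R2 P2].
  rewrite <- (compose_rcp_app g e uQ R1).
  apply inst_eq_compose_rcp with (d := d); auto.
  apply cuP; auto.
  - eapply rcp_app; eauto.
  - eapply peq_trans; [apply peq_sym; exact P2|]. eapply peq_app_r; [exact P1|].
    apply valid_liftD; auto.
Qed.

Lemma compose_rcp_post c d l e e' uQ t : is_rcp P c d l -> valid (total Q) (inl d) uQ (inr e) ->
  valid E e t e' ->
  inst_eq comp_pres c e' (compose_rcp l e' (uQ ++ map (@dsym D E Q) t))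
    (compose_rcp l e uQ ++ map (@dsym C E comp_pres) t).
Proof.
  intros Hl Hv Ht. destruct Hl as [p [g [H1 [H2 ->]]]]. rewrite !compose_rcp_cons. subst c.
  assert (Vg : valid (total Q) (inl (pp_tgt P p)) (map (@csym D E Q) g) (inl d))
    by (apply valid_liftC; exact H2).
  assert (V1 : valid (total Q) (inl (pp_tgt P p)) (map (@csym D E Q) g ++ uQ) (inr e))
    by (eapply valid_cat; eauto).
  assert (V2 : valid (total Q) (inl (pp_tgt P p))
      (map (@csym D E Q) g ++ uQ ++ map (@dsym D E Q) t) (inr e'))
    by (eapply valid_cat; [exact Vg| eapply valid_cat; [exact Hv| apply valid_liftD; exact Ht]]).
  destruct (nfQ_spec _ _ _ V1) as [R1 P1]. destruct (nfQ_spec _ _ _ V2) as [R2 P2].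
  rewrite <- (prefix_rcp_app p t eq_refl R1).
  apply peq_rcp_prefix with (d := pp_tgt P p); auto.
  - eapply rcp_app; eauto.
  - eapply peq_trans; [apply peq_sym; exact P2|]. rewrite app_assoc.
    eapply peq_app_r; [exact P1|]. apply valid_liftD; auto.
Qed.

Lemma compose_paths_post c d e e' uP uQ t : valid (total P) (inl c) uP (inr d) ->
  valid (total Q) (inl d) uQ (inr e) -> valid E e t e' ->
  inst_eq comp_pres c e' (compose_paths c d e' uP (uQ ++ map (@dsym D E Q) t))
    (compose_paths c d e uP uQ ++ map (@dsym C E comp_pres) t).
Proof. intros. unfold compose_paths. eapply compose_rcp_post; eauto. apply nfP_spec; auto. Qed.

Lemma comp_pres_wf : profpres_wf comp_pres.
Proof.
  intros c e l l' H.
  destruct H as [[d [l0 [l0' [q [H1 [H2 [H3 [H4 H5]]]]]]]] |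
      [[d [m [m' [p [H1 [H2 [H3 [H4 H5]]]]]]]] | [f [[[p q] Hr] [H1 H5]]]]].
  - simpl in H5. inversion H5; subst.
    assert (Vq : valid (total Q) (inl (pp_src Q q)) [inr (inl q)] (inr (pp_tgt Q q))) by (simpl; auto).
    split; apply (@rcp_valid C E comp_pres); eapply compose_rcp_is_rcp; eauto.
  - simpl in H5. inversion H5; subst.
    split; apply (@rcp_valid C E comp_pres); eapply prefix_rcp_is_rcp; eauto.
  - simpl in H5. inversion H5; subst. unfold pair_src in H1; simpl in H1, Hr. split.
    + simpl. rewrite H1. auto.
    + apply (@rcp_valid C E comp_pres), compose_paths_is_rcp.
      * simpl. rewrite H1. auto.
      * simpl. rewrite Hr. auto.
Qed.

Lemma comp_pres_nongenerative : nongenerative comp_pres.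
Proof.
  intros f [[p q] Hr] Hf. unfold pair_src in Hf; simpl in Hf, Hr |- *.
  exists (snd (eqn_of_left f (exist _ (p, q) Hr))). split.
  - apply compose_paths_is_rcp; simpl; [rewrite Hf | rewrite Hr]; auto.
  - apply peq_ax. right; right. exists (cp_src C f), (pp_tgt Q q). do 2 (split; [reflexivity|]).
    right; right. exists f, (exist _ (p, q) Hr). auto.
Qed.

Lemma peq_left_nf f p q (Hr : pp_tgt P p = pp_src Q q) e h :
  cp_tgt C f = pp_src P p -> valid E (pp_tgt Q q) h e ->
  peq (total comp_pres) (inl (cp_src C f)) (inr e)
    (compose_paths (cp_src C f) (pp_tgt P p) (pp_tgt Q q) [@csym C D P f; inr (inl p)] [inr (inl q)]
       ++ map (@dsym C E comp_pres) h)
    (@csym C E comp_pres f :: pair_rcp p q h).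
Proof.
  intros Hf Hh. rewrite (pair_rcp_eq p q h Hr). apply peq_sym.
  apply (@peq_app_r (total comp_pres) _ _ (inr (pp_tgt Q q))
           _ [@csym C E comp_pres f; inr (inl (exist _ (p, q) Hr))]); [|apply valid_liftD, Hh].
  apply peq_ax. right; right. exists (cp_src C f), (pp_tgt Q q). do 2 (split; [reflexivity|]).
  right; right. exists f, (exist _ (p, q) Hr). split; [exact Hf | reflexivity].
Qed.

Lemma compose_paths_pre1 f d e uP uQ : valid (total P) (inl (cp_tgt C f)) uP (inr d) ->
  valid (total Q) (inl d) uQ (inr e) ->
  peq (total comp_pres) (inl (cp_src C f)) (inr e)
    (compose_paths (cp_src C f) d e (@csym C D P f :: uP) uQ)
    (@csym C E comp_pres f :: compose_paths (cp_tgt C f) d e uP uQ).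
Proof.
  intros H1 H2. unfold compose_paths at 2.
  destruct (nfP_spec _ _ _ H1) as [[p [g [Hp [Hg E1]]]] P1]. rewrite E1 in P1 |- *.
  assert (Vfp : valid (total P) (inl (cp_src C f)) [@csym C D P f; inr (inl p)] (inr (pp_tgt P p)))
    by (simpl; rewrite Hp; auto).
  assert (Vgu : valid (total Q) (inl (pp_tgt P p)) (map (@csym D E Q) g ++ uQ) (inr e))
    by (eapply valid_cat; [apply valid_liftC; exact Hg| exact H2]).
  destruct (nfQ_spec _ _ _ Vgu) as [[q [h [Hq [Hh Eq]]]] _].
  rewrite compose_rcp_cons, Eq, prefix_rcp_cons.
  eapply peq_trans; [|apply (peq_left_nf f p q (eq_sym Hq)); auto].
  apply inst_eq_sound.
  eapply ie_trans; [apply compose_paths_peq_l; [exact (@peq_pre (total P) (csym f) _ _ _ P1) |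
      exact H2]|].
  eapply ie_trans; [apply (compose_paths_slide (cp_src C f) (pp_tgt P p) d e [@csym C D P f; inr
      (inl p)]); auto|].
  eapply compose_rcp_split; eauto. apply nfP_spec, Vfp.
Qed.

Lemma compose_paths_pre c0 c d e s uP uQ : valid C c0 s c -> valid (total P) (inl c) uP (inr d) ->
  valid (total Q) (inl d) uQ (inr e) ->
  peq (total comp_pres) (inl c0) (inr e) (compose_paths c0 d e (map (@csym C D P) s ++ uP) uQ)
    (map (@csym C E comp_pres) s ++ compose_paths c d e uP uQ).
Proof.
  revert c0; induction s as [|f s IH]; intros c0 Hs H1 H2.
  - simpl in Hs; subst. apply peq_refl. apply (@rcp_valid C E comp_pres). apply
    compose_paths_is_rcp; auto.
  - simpl in Hs; destruct Hs as [Hf Hs]. subst c0.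
    assert (V : valid (total P) (inl (cp_tgt C f)) (map (@csym C D P) s ++ uP) (inr d))
      by (eapply valid_cat; [apply valid_liftC; exact Hs| exact H1]).
    eapply peq_trans; [apply compose_paths_pre1; eauto|].
    simpl. exact (@peq_pre (total comp_pres) (@csym C E comp_pres f) _ _ _ (IH _ Hs H1 H2)).
Qed.

Lemma compose_paths_gen p q (Hr : pp_tgt P p = pp_src Q q) e t : valid E (pp_tgt Q q) t e ->
  inst_eq comp_pres (pp_src P p) e
    (compose_paths (pp_src P p) (pp_tgt P p) e [inr (inl p)] (inr (inl q) :: map (@dsym D E Q) t))
    (inr (inl (exist (fun x => pp_tgt P (fst x) = pp_src Q (snd x)) (p, q) Hr)) :: map
        (@dsym C E comp_pres) t).
Proof.
  intro Ht. unfold compose_paths.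
  assert (Vp : valid (total P) (inl (pp_src P p)) [inr (inl p)] (inr (pp_tgt P p))) by (simpl; auto).
  assert (Vq : valid (total Q) (inl (pp_tgt P p)) (inr (inl q) :: map (@dsym D E Q) t) (inr e))
    by (simpl; split; [rewrite Hr; reflexivity| apply valid_liftD; exact Ht]).
  destruct (nfP_spec _ _ _ Vp) as [Rp Pp]. destruct (nfQ_spec _ _ _ Vq) as [Rq Pq].
  eapply ie_trans.
  { apply inst_eq_compose_rcp with (d := pp_tgt P p) (l' := inr (inl p) :: map (@dsym C D P) nil); auto.
    apply cuP; auto; [exists p, nil; simpl; auto | apply peq_sym, Pp]. }
  rewrite compose_rcp_cons. simpl app.
  eapply ie_trans.
  { apply peq_rcp_prefix with (d := pp_tgt P p) (t' := inr (inl q) :: map (@dsym D E Q) t); auto.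
    - exists q, t. auto.
    - apply peq_sym, Pq. }
  rewrite prefix_rcp_cons, <- (pair_rcp_eq _ _ _ Hr).
  apply ie_refl, pair_rcp_is_rcp; auto.
Qed.

Section Semantics.
Variables (PP : Prof (sem C) (sem D)) (QQ : Prof (sem D) (sem E)).
Variable alP : forall a b, pobj PP a b -> pobj (semP P) a b.
Hypothesis bijP : forall a b, exists be : pobj (semP P) a b -> pobj PP a b,
        (forall x, be (alP a b x) = x) /\ (forall y, alP a b (be y) = y).
Hypothesis natP : forall a a' b b' (h : hom (sem C) a' a) (k : hom (sem D) b b') (x : pobj PP a b),
        alP a' b' (pact PP h k x) = pact (semP P) h k (alP a b x).
Variable alQ : forall a b, pobj QQ a b -> pobj (semP Q) a b.
Hypothesis bijQ : forall a b, exists be : pobj (semP Q) a b -> pobj QQ a b,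
        (forall x, be (alQ a b x) = x) /\ (forall y, alQ a b (be y) = y).
Hypothesis natQ : forall a a' b b' (h : hom (sem D) a' a) (k : hom (sem E) b b') (x : pobj QQ a b),
        alQ a' b' (pact QQ h k x) = pact (semP Q) h k (alQ a b x).

Local Notation eltP := (elt_of_path PP alP bijP).
Local Notation eltQ := (elt_of_path QQ alQ bijQ).
Local Notation pathP := (path_of PP alP).
Local Notation pathQ := (path_of QQ alQ).

Definition tensor c d e (x : pobj PP c d) (y : pobj QQ d e) : pobj (pcomp PP QQ) c e :=
  cls (@pc_rel _ _ _ PP QQ c e)
    (existT (fun b : ob (sem D) => (pobj PP c b * pobj QQ b e)%type) d (x, y)).
Arguments tensor {c d e} x y.

Lemma tensor_slide c d' d e u g w
  (Hu : valid (total P) (inl c) u (inr d')) (Hg : valid D d' g d)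
  (Hw : valid (total Q) (inl d) w (inr e))
  (H1 : valid (total Q) (inl d') (map (@csym D E Q) g ++ w) (inr e))
  (H2 : valid (total P) (inl c) (u ++ map (@dsym C D P) g) (inr d)) :
  tensor (eltP u Hu) (eltQ _ H1) = tensor (eltP _ H2) (eltQ w Hw).
Proof.
  apply cls_eq, rst_step.
  exists d', d, (hom_of Hg), (eltP u Hu), (eltQ w Hw).
  split; do 3 f_equal; symmetry; rewrite idm_hom_of; eapply elt_of_path_act; eauto.
  simpl. rewrite app_nil_r. reflexivity.
Qed.
Arguments tensor_slide {c d' d e u g w}.

Lemma valid_pre_gen c s (r : pair_sym) : valid C c s (pair_src r) ->
  valid (total P) (inl c) (map (@csym C D P) s ++ [inr (inl (fst (proj1_sig r)))])
    (inr (pp_tgt P (fst (proj1_sig r)))).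
Proof. intro H. eapply valid_cat; [apply valid_liftC; exact H|]. simpl. auto. Qed.

Lemma valid_gen_post e t (r : pair_sym) : valid E (pair_tgt r) t e ->
  valid (total Q) (inl (pp_tgt P (fst (proj1_sig r))))
    (inr (inl (snd (proj1_sig r))) :: map (@dsym D E Q) t) (inr e).
Proof.
  intro H. destruct r as [[p q] Hr]. simpl in *. split.
  - rewrite Hr; reflexivity.
  - apply valid_liftD. exact H.
Qed.

Arguments valid_pre_gen {c s r} _.
Arguments valid_gen_post {e t r} _.

Definition denot c e s (r : pair_sym) t (Hs : valid C c s (pair_src r)) (Ht : valid E (pair_tgt r) t e)
  : pobj (pcomp PP QQ) c e :=
  tensor (eltP _ (valid_pre_gen Hs)) (eltQ _ (valid_gen_post Ht)).
Arguments denot {c e s r t} Hs Ht.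

Definition denotes c e (v : list comp_tsym) (z : pobj (pcomp PP QQ) c e) : Prop :=
  exists s r t (Hs : valid C c s (pair_src r)) (Ht : valid E (pair_tgt r) t e),
    v = map (@csym C E comp_pres) s ++ inr (inl r) :: map (@dsym C E comp_pres) t /\ z = denot Hs Ht.
Arguments denotes : clear implicits.

Lemma denotes_denot c e s r t (Hs : valid C c s (pair_src r)) (Ht : valid E (pair_tgt r) t e) v :
  v = map (@csym C E comp_pres) s ++ inr (inl r) :: map (@dsym C E comp_pres) t ->
  denotes c e v (denot Hs Ht).
Proof. intros ->. exists s, r, t, Hs, Ht. auto. Qed.

Lemma denotes_exists c e v : valid (total comp_pres) (inl c) v (inr e) -> exists z, denotes c e v z.
Proof.
  intro H. destruct (cross_path_decomp _ _ _ H) as [s [r [t [-> [Hs Ht]]]]].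
  exists (denot Hs Ht). apply denotes_denot. reflexivity.
Qed.

Lemma denotes_fun c e v z z' : denotes c e v z -> denotes c e v z' -> z = z'.
Proof.
  intros [s [r [t [Hs [Ht [E1 ->]]]]]] [s' [r' [t' [Hs' [Ht' [E2 ->]]]]]].
  rewrite E1 in E2. destruct (@cross_path_decomp_unique C E comp_pres _ _ _ _ _ _ E2) as [<- [<- <-]].
  rewrite (proof_irrelevance _ Hs Hs'), (proof_irrelevance _ Ht Ht'). reflexivity.
Qed.

Lemma denot_peq_pre c e s s' r t (Hs : valid C c s (pair_src r)) (Hs' : valid C c s' (pair_src r))
  (Ht : valid E (pair_tgt r) t e) :
  peq C c (pair_src r) s s' -> denot Hs Ht = denot Hs' Ht.
Proof.
  intro H. unfold denot. f_equal. apply elt_of_path_peq.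
  eapply peq_app_r; [apply peq_liftC; exact H|]. simpl. auto.
Qed.

Lemma denot_peq_post c e s r t t' (Hs : valid C c s (pair_src r)) (Ht : valid E (pair_tgt r) t e)
  (Ht' : valid E (pair_tgt r) t' e) :
  peq E (pair_tgt r) e t t' -> denot Hs Ht = denot Hs Ht'.
Proof.
  intro H. unfold denot. f_equal. apply elt_of_path_peq.
  apply (@peq_app_l (total Q) [inr (inl (snd (proj1_sig r)))] _ (inr (pair_tgt r)));
    [|apply peq_liftD, H].
  destruct r as [[p q] Hr]. simpl in *. split; [rewrite Hr|]; reflexivity.
Qed.

Lemma denotes_prefix_rcp c0 e e0 p d m x0 y0
  (V1 : valid (total P) (inl c0) (map (@csym C D P) x0 ++ [inr (inl p)]) (inr (pp_tgt P p)))
  (V2 : valid (total Q) (inl (pp_tgt P p)) (m ++ map (@dsym D E Q) y0) (inr e0)) :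
  pp_tgt P p = d -> is_rcp Q d e m ->
  valid C c0 x0 (pp_src P p) -> valid E e y0 e0 ->
  denotes c0 e0 (map (@csym C E comp_pres) x0 ++ prefix_rcp p m ++ map (@dsym C E comp_pres) y0)
    (tensor (eltP _ V1) (eltQ _ V2)).
Proof.
  intros Hp [q [h [Hq [Hh ->]]]] Hx Hy.
  assert (Hpq : pp_tgt P p = pp_src Q q) by congruence.
  rewrite prefix_rcp_cons, (pair_rcp_eq p q h Hpq).
  set (r := exist (fun x => pp_tgt P (fst x) = pp_src Q (snd x)) (p, q) Hpq).
  assert (Hs : valid C c0 x0 (pair_src r)) by exact Hx.
  assert (Ht : valid E (pair_tgt r) (h ++ y0) e0) by (eapply valid_cat; eauto).
  replace (tensor _ _) with (denot Hs Ht).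
  - apply denotes_denot. simpl. rewrite map_app. reflexivity.
  - unfold denot. f_equal; apply elt_of_path_irr; simpl; [|rewrite map_app]; reflexivity.
Qed.
Arguments denotes_prefix_rcp {c0 e e0 p d m x0 y0}.

Lemma denotes_compose_rcp c0 c d e0 l0 q x0 y0
  (V1 : valid (total P) (inl c0) (map (@csym C D P) x0 ++ l0) (inr d))
  (V2 : valid (total Q) (inl d) (inr (inl q) :: map (@dsym D E Q) y0) (inr e0)) :
  is_rcp P c d l0 -> pp_src Q q = d -> valid C c0 x0 c -> valid E (pp_tgt Q q) y0 e0 ->
  denotes c0 e0 (map (@csym C E comp_pres) x0 ++ compose_rcp l0 (pp_tgt Q q) [inr (inl q)]
                   ++ map (@dsym C E comp_pres) y0)
    (tensor (eltP _ V1) (eltQ _ V2)).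
Proof.
  intros [p [g [Hp [Hg ->]]]] Hq Hx Hy. subst c. rewrite compose_rcp_cons.
  assert (Vg : valid (total Q) (inl (pp_tgt P p)) (map (@csym D E Q) g) (inl d))
    by (apply valid_liftC; exact Hg).
  assert (Vgq : valid (total Q) (inl (pp_tgt P p)) (map (@csym D E Q) g ++ [inr (inl q)])
      (inr (pp_tgt Q q)))
    by (eapply valid_cat; [exact Vg| simpl; rewrite Hq; auto]).
  destruct (nfQ_spec _ _ _ Vgq) as [R1 P1].
  assert (W1 : valid (total P) (inl c0) (map (@csym C D P) x0 ++ [inr (inl p)]) (inr (pp_tgt P p)))
    by (eapply valid_cat; [apply valid_liftC; exact Hx| simpl; auto]).
  assert (W2 : valid (total Q) (inl (pp_tgt P p))
      (nf Q (pp_tgt P p) (pp_tgt Q q) (map (@csym D E Q) g ++ [inr (inl q)]) ++ map (@dsym D E Q)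
          y0) (inr e0))
    by (eapply valid_cat; [apply (@rcp_valid D E Q); exact R1| apply valid_liftD; exact Hy]).
  assert (W3 : valid (total Q) (inl (pp_tgt P p))
      (map (@csym D E Q) g ++ inr (inl q) :: map (@dsym D E Q) y0) (inr e0))
    by (eapply valid_cat; [exact Vg| exact V2]).
  assert (W4 : valid (total P) (inl c0)
      ((map (@csym C D P) x0 ++ [inr (inl p)]) ++ map (@dsym C D P) g) (inr d))
    by (eapply valid_cat; [exact W1| apply valid_liftD; exact Hg]).
  replace (tensor _ _) with (tensor (eltP _ W1) (eltQ _ W2)); [eapply denotes_prefix_rcp; eauto|].
  transitivity (tensor (eltP _ W1) (eltQ _ W3)).
  - f_equal. apply elt_of_path_peq.
    replace (map (@csym D E Q) g ++ inr (inl q) :: map (@dsym D E Q) y0) with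
      ((map (@csym D E Q) g ++ [inr (inl q)]) ++ map (@dsym D E Q) y0)
      by (rewrite <- app_assoc; reflexivity).
    eapply peq_app_r; [apply peq_sym, P1 | apply valid_liftD, Hy].
  - rewrite (tensor_slide W1 Hg V2 W3 W4). f_equal. apply elt_of_path_irr. rewrite <- app_assoc.
    reflexivity.
Qed.
Arguments denotes_compose_rcp {c0 c d e0 l0 q x0 y0}.

Lemma denotes_denot_eq c e s r t (Hs : valid C c s (pair_src r)) (Ht : valid E (pair_tgt r) t e) v z :
  denotes c e v z -> v = map (@csym C E comp_pres) s ++ inr (inl r) :: map (@dsym C E comp_pres) t ->
  z = denot Hs Ht.
Proof. intros Hz Ev. eapply denotes_fun; [exact Hz | apply denotes_denot, Ev]. Qed.
Arguments denotes_denot_eq {c e s r t} Hs Ht {v z}.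

Definition sound_in_context a b (l l' : list comp_tsym) : Prop :=
  forall c0 e0 x y z z',
    valid (total comp_pres) (inl c0) x a -> valid (total comp_pres) b y (inr e0) ->
    denotes c0 e0 (x ++ l ++ y) z -> denotes c0 e0 (x ++ l' ++ y) z' -> z = z'.

Lemma sound_in_context_C c c' k k' : cp_eq C c c' k k' ->
  sound_in_context (inl c) (inl c') (map (@csym C E comp_pres) k) (map (@csym C E comp_pres) k').
Proof.
  intros Hk c0 e0 x y z z' Hx Hy Hz Hz'.
  destruct (valid_inl_inl _ _ _ Hx) as [x0 [-> Hx0]].
  destruct (cross_path_decomp _ _ _ Hy) as [s [r [t [-> [Hs Ht]]]]].
  destruct (wfC _ _ _ _ Hk) as [Vk Vk'].
  assert (Hxs : valid C c0 (x0 ++ k ++ s) (pair_src r)) by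
    (eapply valid_cat; eauto; eapply valid_cat; eauto).
  assert (Hxs' : valid C c0 (x0 ++ k' ++ s) (pair_src r)) by
    (eapply valid_cat; eauto; eapply valid_cat; eauto).
  rewrite (denotes_denot_eq Hxs Ht Hz), (denotes_denot_eq Hxs' Ht Hz')
    by (rewrite !map_app, <- !app_assoc; reflexivity).
  apply denot_peq_pre. eapply peq_app_l; [exact Hx0|]. eapply peq_app_r; [|exact Hs].
  apply peq_ax, Hk.
Qed.

Lemma sound_in_context_E e e' k k' : cp_eq E e e' k k' ->
  sound_in_context (inr e) (inr e') (map (@dsym C E comp_pres) k) (map (@dsym C E comp_pres) k').
Proof.
  intros Hk c0 e0 x y z z' Hx Hy Hz Hz'.
  destruct (cross_path_decomp _ _ _ Hx) as [s [r [t [-> [Hs Ht]]]]].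
  destruct (valid_inr_inr _ _ _ Hy) as [y0 [-> Hy0]].
  destruct (wfE _ _ _ _ Hk) as [Vk Vk'].
  assert (Hty : valid E (pair_tgt r) (t ++ k ++ y0) e0) by
    (eapply valid_cat; eauto; eapply valid_cat; eauto).
  assert (Hty' : valid E (pair_tgt r) (t ++ k' ++ y0) e0) by
    (eapply valid_cat; eauto; eapply valid_cat; eauto).
  rewrite (denotes_denot_eq Hs Hty Hz), (denotes_denot_eq Hs Hty' Hz')
    by (rewrite !map_app, <- !app_assoc; reflexivity).
  apply denot_peq_post. eapply peq_app_l; [exact Ht|]. eapply peq_app_r; [|exact Hy0].
  apply peq_ax, Hk.
Qed.

Lemma sound_in_context_eqn_of_P c l0 l0' q :
  pp_eq P c (pp_src Q q) l0 l0' -> is_rcp P c (pp_src Q q) l0 -> is_rcp P c (pp_src Q q) l0' ->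
  sound_in_context (inl c) (inr (pp_tgt Q q))
    (compose_rcp l0 (pp_tgt Q q) [inr (inl q)]) (compose_rcp l0' (pp_tgt Q q) [inr (inl q)]).
Proof.
  intros Hl Hl0 Hl0' c0 e0 x y z z' Hx Hy Hz Hz'.
  destruct (valid_inl_inl _ _ _ Hx) as [x0 [-> Hx0]].
  destruct (valid_inr_inr _ _ _ Hy) as [y0 [-> Hy0]].
  assert (V1 : valid (total P) (inl c0) (map (@csym C D P) x0 ++ l0) (inr (pp_src Q q)))
    by (eapply valid_cat; [apply valid_liftC; exact Hx0| apply (@rcp_valid C D P); exact Hl0]).
  assert (V1' : valid (total P) (inl c0) (map (@csym C D P) x0 ++ l0') (inr (pp_src Q q)))
    by (eapply valid_cat; [apply valid_liftC; exact Hx0| apply (@rcp_valid C D P); exact Hl0']).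
  assert (V2 : valid (total Q) (inl (pp_src Q q)) (inr (inl q) :: map (@dsym D E Q) y0) (inr e0))
    by (simpl; split; [reflexivity| apply valid_liftD; exact Hy0]).
  rewrite (denotes_fun Hz (denotes_compose_rcp V1 V2 Hl0 eq_refl Hx0 Hy0)),
          (denotes_fun Hz' (denotes_compose_rcp V1' V2 Hl0' eq_refl Hx0 Hy0)).
  f_equal. apply elt_of_path_peq. eapply peq_app_l; [apply valid_liftC; exact Hx0|].
  apply peq_ax. right; right. eauto.
Qed.

Lemma sound_in_context_eqn_of_Q e m m' p :
  pp_eq Q (pp_tgt P p) e m m' -> is_rcp Q (pp_tgt P p) e m -> is_rcp Q (pp_tgt P p) e m' ->
  sound_in_context (inl (pp_src P p)) (inr e) (prefix_rcp p m) (prefix_rcp p m').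
Proof.
  intros Hm Hm0 Hm0' c0 e0 x y z z' Hx Hy Hz Hz'.
  destruct (valid_inl_inl _ _ _ Hx) as [x0 [-> Hx0]].
  destruct (valid_inr_inr _ _ _ Hy) as [y0 [-> Hy0]].
  assert (V1 : valid (total P) (inl c0) (map (@csym C D P) x0 ++ [inr (inl p)]) (inr (pp_tgt P p)))
    by (eapply valid_cat; [apply valid_liftC; exact Hx0| simpl; auto]).
  assert (V2 : valid (total Q) (inl (pp_tgt P p)) (m ++ map (@dsym D E Q) y0) (inr e0))
    by (eapply valid_cat; [apply (@rcp_valid D E Q); exact Hm0| apply valid_liftD; exact Hy0]).
  assert (V2' : valid (total Q) (inl (pp_tgt P p)) (m' ++ map (@dsym D E Q) y0) (inr e0))
    by (eapply valid_cat; [apply (@rcp_valid D E Q); exact Hm0'| apply valid_liftD; exact Hy0]).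
  rewrite (denotes_fun Hz (denotes_prefix_rcp V1 V2 eq_refl Hm0 Hx0 Hy0)),
          (denotes_fun Hz' (denotes_prefix_rcp V1 V2' eq_refl Hm0' Hx0 Hy0)).
  f_equal. apply elt_of_path_peq. eapply peq_app_r; [|apply valid_liftD; exact Hy0].
  apply peq_ax. right; right. eauto.
Qed.

Lemma sound_in_context_left f p q (Hr : pp_tgt P p = pp_src Q q) : cp_tgt C f = pp_src P p ->
  sound_in_context (inl (cp_src C f)) (inr (pp_tgt Q q))
    [@csym C E comp_pres f; inr (inl (exist _ (p, q) Hr))]
    (compose_paths (cp_src C f) (pp_tgt P p) (pp_tgt Q q) [@csym C D P f; inr (inl p)] [inr (inl q)]).
Proof.
  intros Hf c0 e0 x y z z' Hx Hy Hz Hz'.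
  destruct (valid_inl_inl _ _ _ Hx) as [x0 [-> Hx0]].
  destruct (valid_inr_inr _ _ _ Hy) as [y0 [-> Hy0]].
  assert (Vfp : valid (total P) (inl (cp_src C f)) [@csym C D P f; inr (inl p)] (inr (pp_tgt P p)))
    by (simpl; rewrite Hf; auto).
  destruct (nfP_spec _ _ _ Vfp) as [Rfp Pfp].
  set (r := exist (fun x => pp_tgt P (fst x) = pp_src Q (snd x)) (p, q) Hr).
  assert (Hs : valid C c0 (x0 ++ [f]) (pair_src r)) by (eapply valid_cat; [exact Hx0| simpl; auto]).
  assert (Ht : valid E (pair_tgt r) y0 e0) by exact Hy0.
  assert (V1 : valid (total P) (inl c0)
      (map (@csym C D P) x0 ++ nf P (cp_src C f) (pp_tgt P p) [@csym C D P f; inr (inl p)])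
        (inr (pp_tgt P p)))
    by (eapply valid_cat; [apply valid_liftC; exact Hx0| apply (@rcp_valid C D P); exact Rfp]).
  assert (V2 : valid (total Q) (inl (pp_tgt P p)) (inr (inl q) :: map (@dsym D E Q) y0) (inr e0))
    by (simpl; split; [rewrite Hr; reflexivity| apply valid_liftD; exact Hy0]).
  rewrite (denotes_denot_eq Hs Ht Hz) by (rewrite map_app, <- app_assoc; reflexivity).
  rewrite (denotes_fun Hz' (denotes_compose_rcp V1 V2 Rfp (eq_sym Hr) Hx0 Hy0)).
  unfold denot. f_equal; apply elt_of_path_peq; [|apply peq_refl; exact V2].
  simpl. rewrite map_app, <- app_assoc.
  eapply peq_app_l; [apply valid_liftC; exact Hx0| exact Pfp].
Qed.

Lemma sound_in_context_comp_eq c e l l' : comp_eq c e l l' -> sound_in_context (inl c) (inr e) l l'.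
Proof.
  intros [[d [l0 [l0' [q [H1 [H2 [H3 [<- H5]]]]]]]] | [[d [m [m' [p [H1 [H2 [H3 [<- H5]]]]]]]]
         | [f [[[p q] Hr] [H1 H5]]]]];
    simpl in H5; inversion H5; subst.
  - apply sound_in_context_eqn_of_P; auto.
  - apply sound_in_context_eqn_of_Q; auto.
  - apply sound_in_context_left, H1.
Qed.

Lemma sound_in_context_peq a b l l' : peq (total comp_pres) a b l l' -> sound_in_context a b l l'.
Proof.
  intro H; induction H; intros c0 e0 x y z z' Hx Hy Hz Hz'.
  - eapply denotes_fun; eauto.
  - destruct H as [[c [c' [k [k' [-> [-> [-> [-> Hk]]]]]]]] | [[d [d' [k [k' [-> [-> [-> [-> Hk]]]]]]]]
                  | [c [e [-> [-> Hl]]]]]].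
    + eapply sound_in_context_C; eauto.
    + eapply sound_in_context_E; eauto.
    + eapply sound_in_context_comp_eq; eauto.
  - symmetry; eapply IHpeq; eauto.
  - destruct (peq_valid (total_wf wfC wfE comp_pres_wf) H) as [_ V].
    assert (Vx : valid (total comp_pres) (inl c0) (x ++ l' ++ y) (inr e0))
      by (eapply valid_cat; [exact Hx | eapply valid_cat; eauto]).
    destruct (denotes_exists _ _ _ Vx) as [z1 Hz1].
    transitivity z1; [eapply IHpeq1 | eapply IHpeq2]; eauto.
  - apply (IHpeq c0 e0 (x ++ [f]) y); rewrite <- ?app_assoc; auto.
    eapply valid_cat; [exact Hx| simpl; auto].
  - rewrite <- !app_assoc in Hz, Hz'. apply (IHpeq c0 e0 x (f :: y)); simpl; auto.
Qed.

Lemma denotes_peq c e v v' z z' : peq (total comp_pres) (inl c) (inr e) v v' ->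
  denotes c e v z -> denotes c e v' z' -> z = z'.
Proof.
  intros H Hz Hz'. apply (sound_in_context_peq H nil nil); simpl; rewrite ?app_nil_r; auto.
Qed.

Definition transl c e (w : pc_car PP QQ c e) : list comp_tsym :=
  compose_paths c (projT1 w) e (pathP (fst (projT2 w))) (pathQ (snd (projT2 w))).

Lemma transl_is_rcp c e (w : pc_car PP QQ c e) : is_rcp comp_pres c e (transl w).
Proof. apply compose_paths_is_rcp; apply path_of_valid. Qed.

Lemma transl_valid c e (w : pc_car PP QQ c e) : valid (total comp_pres) (inl c) (transl w) (inr e).
Proof. apply rcp_valid, transl_is_rcp. Qed.

Lemma transl_pc_rel c e (w w' : pc_car PP QQ c e) : pc_rel w w' -> inst_eq comp_pres c e (transl w)
  (transl w').
Proof.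
  intros [b [b' [g [x [y [-> ->]]]]]]. unfold transl; simpl.
  eapply ie_trans; [apply compose_paths_peq_r; [apply path_of_valid | eapply path_of_act_l; eauto]|].
  eapply ie_trans; [apply ie_sym, compose_paths_slide;
    [apply path_of_valid | exact (proj2_sig (rep g)) | apply path_of_valid]|].
  apply compose_paths_peq_l; [|apply path_of_valid]. apply peq_sym. eapply path_of_act_r; eauto.
Qed.

Lemma transl_coend c e (w w' : pc_car PP QQ c e) :
  clos_refl_sym_trans _ (@pc_rel _ _ _ PP QQ c e) w w' -> inst_eq comp_pres c e (transl w) (transl w').
Proof.
  induction 1.
  - apply transl_pc_rel; auto.
  - apply ie_refl, transl_is_rcp.
  - apply ie_sym; auto.
  - eapply ie_trans; eauto.
Qed.

Definition alR c e (z : pobj (pcomp PP QQ) c e) : pobj (semP comp_pres) c e :=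
  cls (@path_rel (total comp_pres) (inl c) (inr e)) (exist _ (transl (rep z)) (transl_valid (rep z))).

Lemma alR_cls c e (w : pc_car PP QQ c e) :
  alR (cls _ w) = cls (@path_rel (total comp_pres) (inl c) (inr e))
    (exist _ (transl w) (transl_valid w)).
Proof. apply cls_peq, inst_eq_sound, transl_coend, rep_cls. Qed.

Lemma denotes_transl c e (w : pc_car PP QQ c e) : denotes c e (transl w) (cls _ w).
Proof.
  destruct w as [d [x y]]. unfold transl, compose_paths; simpl.
  destruct (nfP_spec _ _ _ (path_of_valid PP alP x)) as [[p [g [<- [Hg Ex]]]] Px].
  rewrite Ex in Px |- *. rewrite compose_rcp_cons.
  assert (Vgy : valid (total Q) (inl (pp_tgt P p)) (map (@csym D E Q) g ++ pathQ y) (inr e))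
    by (eapply valid_cat; [apply valid_liftC, Hg | apply path_of_valid]).
  destruct (nfQ_spec _ _ _ Vgy) as [Rq Pq].
  assert (V1 : valid (total P) (inl (pp_src P p)) (map (@csym C D P) nil ++ [inr (inl p)])
      (inr (pp_tgt P p)))
    by (simpl; auto).
  assert (V2 : valid (total Q) (inl (pp_tgt P p))
      (nf Q (pp_tgt P p) e (map (@csym D E Q) g ++ pathQ y) ++ map (@dsym D E Q) nil) (inr e))
    by (rewrite app_nil_r; apply rcp_valid, Rq).
  assert (W : valid (total P) (inl (pp_src P p))
      ((map (@csym C D P) nil ++ [inr (inl p)]) ++ map (@dsym C D P) g) (inr d))
    by (eapply valid_cat; [exact V1 | apply valid_liftD, Hg]).
  replace (cls _ _) with (tensor (eltP _ V1) (eltQ _ V2)).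
  - generalize (denotes_prefix_rcp V1 V2 eq_refl Rq (eq_refl (pp_src P p)) (eq_refl e)).
    simpl. rewrite !app_nil_r. auto.
  - transitivity (tensor (eltP _ V1) (eltQ _ Vgy)).
    + f_equal. apply elt_of_path_peq. rewrite app_nil_r. apply peq_sym, Pq.
    + rewrite (tensor_slide V1 Hg (path_of_valid QQ alQ y) Vgy W). unfold tensor. do 3 f_equal.
      * transitivity (eltP _ (path_of_valid PP alP x));
        [apply elt_of_path_peq, peq_sym, Px | apply elt_of_path_of].
      * apply elt_of_path_of.
Qed.

Definition beR c e (V : pobj (semP comp_pres) c e) : pobj (pcomp PP QQ) c e :=
  proj1_sig (constructive_indefinite_description _ (denotes_exists _ _ _ (proj2_sig (rep V)))).

Lemma beR_spec c e (V : pobj (semP comp_pres) c e) : denotes c e (proj1_sig (rep V)) (beR V).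
Proof. exact (proj2_sig (constructive_indefinite_description _ _)). Qed.

Lemma transl_denot c e s r t (Hs : valid C c s (pair_src r)) (Ht : valid E (pair_tgt r) t e) :
  inst_eq comp_pres c e (transl (rep (denot Hs Ht)))
    (compose_paths c (pp_tgt P (fst (proj1_sig r))) e
        (map (@csym C D P) s ++ [inr (inl (fst (proj1_sig r)))])
        (inr (inl (snd (proj1_sig r))) :: map (@dsym D E Q) t)).
Proof.
  eapply ie_trans; [apply transl_coend, rep_cls|].
  unfold transl; simpl.
  eapply ie_trans; [apply compose_paths_peq_l; [eapply path_of_elt_of_path | apply path_of_valid]|].
  apply compose_paths_peq_r; [apply (valid_pre_gen Hs) | eapply path_of_elt_of_path].
Qed.

Lemma transl_denotes c e v z : denotes c e v z -> peq (total comp_pres) (inl c) (inr e)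
  (transl (rep z)) v.
Proof.
  intros [s [[[p q] Hr] [t [Hs [Ht [-> ->]]]]]]. unfold pair_src in Hs; simpl in Hs, Hr.
  eapply peq_trans; [apply inst_eq_sound, transl_denot|]. simpl.
  eapply peq_trans; [apply compose_paths_pre; [exact Hs | simpl; auto | apply (valid_gen_post Ht)]|].
  eapply peq_app_l; [apply valid_liftC, Hs|].
  apply inst_eq_sound, compose_paths_gen, Ht.
Qed.

Lemma transl_denotes_rcp c e v z : is_rcp comp_pres c e v -> denotes c e v z ->
  inst_eq comp_pres c e (transl (rep z)) v.
Proof.
  intros [r0 [h0 [Hr0 [Hh0 ->]]]] [s [r [u [Hs [Hu [Ev ->]]]]]].
  destruct (@cross_path_decomp_unique C E comp_pres nil r0 h0 s r u Ev) as [<- [<- <-]].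
  eapply ie_trans; [apply transl_denot|].
  destruct r0 as [[p q] Hr]. unfold pair_src in Hs; simpl in *. subst c.
  apply compose_paths_gen, Hu.
Qed.

Lemma comp_pres_conservative : conservative comp_pres.
Proof.
  intros c e t t' Rt Rt' H.
  destruct (denotes_exists _ _ _ (rcp_valid Rt)) as [z Hz].
  destruct (denotes_exists _ _ _ (rcp_valid Rt')) as [z' Hz'].
  rewrite (denotes_peq H Hz Hz') in Hz.
  eapply ie_trans; [apply ie_sym, (transl_denotes_rcp Rt Hz) | apply (transl_denotes_rcp Rt' Hz')].
Qed.

Lemma beR_alR c e (z : pobj (pcomp PP QQ) c e) : beR (alR z) = z.
Proof.
  rewrite <- (cls_rep z) at 2.
  eapply denotes_peq; [| apply beR_spec | apply denotes_transl].
  apply (rep_cls_peq (exist (fun l => valid (total comp_pres) (inl c) l (inr e)) _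
        (transl_valid (rep z)))).
Qed.

Lemma alR_beR c e (V : pobj (semP comp_pres) c e) : alR (beR V) = V.
Proof.
  transitivity (cls (@path_rel (total comp_pres) (inl c) (inr e)) (rep V)); [|apply cls_rep].
  apply cls_peq, transl_denotes, beR_spec.
Qed.

Lemma alR_natural c c' e e' (h : hom (sem C) c' c) (k : hom (sem E) e e') (z : pobj (pcomp PP QQ) c e) :
  alR (pact (pcomp PP QQ) h k z) = pact (semP comp_pres) h k (alR z).
Proof.
  set (hl := proj1_sig (rep h)). set (kl := proj1_sig (rep k)).
  assert (Vh : valid C c' hl c) by exact (proj2_sig (rep h)).
  assert (Vk : valid E e kl e') by exact (proj2_sig (rep k)).
  assert (V : valid (total comp_pres) (inl c')
      (map (@csym C E comp_pres) hl ++ transl (rep z) ++ map (@dsym C E comp_pres) kl) (inr e')).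
  { eapply valid_cat; [apply valid_liftC; exact Vh|].
    eapply valid_cat; [apply transl_valid | apply valid_liftD; exact Vk]. }
  transitivity (cls (@path_rel (total comp_pres) (inl c') (inr e'))
                  (exist (fun l => valid (total comp_pres) (inl c') l (inr e')) _ V)).
  2:{ transitivity (pact (semP comp_pres) (hom_of Vh) (hom_of Vk) (alR z)).
      - symmetry. apply semP_act_cls; auto. apply comp_pres_wf.
      - f_equal; symmetry; (etransitivity; [apply hom_of_rep | apply hom_of_irr; reflexivity]). }
  unfold pact at 1; simpl. rewrite alR_cls. apply cls_peq; simpl.
  clear V. unfold transl. destruct (rep z) as [d [x y]]; simpl.
  assert (Vhx : valid (total P) (inl c') (map (@csym C D P) hl ++ pathP x) (inr d))
    by (eapply valid_cat; [apply valid_liftC, Vh | apply path_of_valid]).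
  eapply peq_trans; [apply inst_eq_sound, compose_paths_peq_l;
      [eapply path_of_act_l; eauto | apply path_of_valid]|].
  eapply peq_trans; [apply inst_eq_sound, compose_paths_peq_r;
      [exact Vhx | eapply path_of_act_r; eauto]|].
  eapply peq_trans; [apply inst_eq_sound, compose_paths_post; eauto; apply path_of_valid|].
  rewrite app_assoc. eapply peq_app_r; [|apply valid_liftD; exact Vk].
  apply compose_paths_pre; auto; apply path_of_valid.
Qed.

Lemma pcomp_iso_comp_pres : prof_iso (pcomp PP QQ) (semP comp_pres).
Proof.
  exists alR. split.
  - intros c e. exists (@beR c e). split; [apply beR_alR | apply alR_beR].
  - apply alR_natural.
Qed.

End Semantics.
End CompositePresentation.

Lemma pair_sym_finite (C D E : catpres) (P : profpres C D) (Q : profpres D E) :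
  fin_type (pp_fun P) -> fin_type (pp_fun Q) -> fin_type (pair_sym P Q).
Proof.
  intros [LP HP] [LQ HQ].
  exists (flat_map (fun p => flat_map (fun q =>
        match excluded_middle_informative (pp_tgt P p = pp_src Q q) with
        | left H => [exist (fun x => pp_tgt P (fst x) = pp_src Q (snd x)) (p, q) H]
        | right _ => [] end) LQ) LP).
  intros [[p q] H]. apply in_flat_map. exists p. split; auto.
  apply in_flat_map. exists q. split; auto.
  destruct (excluded_middle_informative _) as [H'|H']; [|contradiction].
  left. f_equal. apply proof_irrelevance.
Qed.

Lemma comp_pres_finite (C D E : catpres) (P : profpres C D) (Q : profpres D E) :
  catpres_finite C -> profpres_finite P -> profpres_finite Q -> profpres_finite (comp_pres P Q).
Proof.
  intros [_ [[LC HC] _]] [FP [LPe HPe]] [FQ [LQe HQe]].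
  destruct (pair_sym_finite P Q FP FQ) as [LR HR]. destruct FP as [LP HP], FQ as [LQ HQ].
  split; [exists LR; exact HR|].
  exists (flat_map (fun x => map (@eqn_of_P C D E P Q x) LQ) LPe ++ flat_map
      (fun y => map (@eqn_of_Q C D E P Q y) LP) LQe
          ++ flat_map (fun f => map (@eqn_of_left C D E P Q f) LR) LC).
  intros c e l l' [[d [l0 [l0' [q [H1 [_ [_ [<- H5]]]]]]]] | [[d [m [m' [p [H1 [_ [_ [<- H5]]]]]]]]
                  | [f [r [_ H5]]]]];
    rewrite !in_app_iff, !in_flat_map.
  - left. exists (c, pp_src Q q, l0, l0'). split; auto. apply in_map_iff. eauto.
  - right; left. exists (pp_tgt P p, e, m, m'). split; auto. apply in_map_iff. eauto.
  - right; right. exists f. split; auto. apply in_map_iff. eauto.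
Qed.

Theorem mainTheorem16 (C D E : catpres) (P : profpres C D) (Q : profpres D E)
  (PP : Prof (sem C) (sem D)) (QQ : Prof (sem D) (sem E)) :
  catpres_wf C -> catpres_wf D -> catpres_wf E ->
  catpres_finite C -> catpres_finite D -> catpres_finite E ->
  is_prof PP -> is_prof QQ ->
  profpres_wf P -> profpres_wf Q ->
  profpres_finite P -> profpres_finite Q ->
  curryable P -> curryable Q ->
  prof_iso PP (semP P) -> prof_iso QQ (semP Q) ->
  exists R : profpres C E,
    profpres_wf R /\ profpres_finite R /\ curryable R /\
    prof_iso (pcomp PP QQ) (semP R).
Proof.
  intros wfC wfD wfE fC _ _ _ _ wfP wfQ fP fQ cuP cuQ [alP [bijP natP]] [alQ [bijQ natQ]].
  exists (comp_pres P Q). split; [|split; [|split; [split|]]].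
  - exact (comp_pres_wf cuP cuQ).
  - exact (comp_pres_finite fC fP fQ).
  - exact (comp_pres_nongenerative cuP cuQ).
  - eapply comp_pres_conservative with (alP := alP) (alQ := alQ); eauto.
  - eapply pcomp_iso_comp_pres with (alP := alP) (alQ := alQ); eauto.
Qed.
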